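(* Let $a\in\mathbb D$ and $0\le\gamma<2\pi$, and put $a'=|1+a|-1$ and $\gamma_a=\arg(1+\overline a)$. Let $f=h+\overline g\in\mathcal S(H^a_\gamma)$ and assume $g'(0)=a'e^{2i(\gamma+\gamma_a)}$. Then $a'\in(-1,1)$, $|g'(0)|<1$, and for all $z\in\mathbb D$ $$h(z)+e^{-2i(\gamma+\gamma_a)}g(z)=\frac{(1+a')z}{1-e^{i(\gamma+\gamma_a)}z}.$$
   Context: $\mathbb D$ is the open unit disk. A harmonic map $f$ on $\mathbb D$ is written canonically as $f=h+\overline g$ with $h,g$ analytic in $\mathbb D$ and $g(0)=0$. $\mathcal H$ is the set of such $f$ with $h(0)=g(0)=0$ and $h'(0)=1$. $f$ is sense-preserving if $|h'(z)|>|g'(z)|$ on $\mathbb D$. $\mathcal S_H$ is the set of sense-preserving univalent $f\in\mathcal H$. For $a\in\mathbb D$ and $0\le\gamma<2\pi$, $H^a_\gamma=\{w\in\mathbb C:\ \mathrm{Re}\big(\tfrac{e^{i\gamma}}{1+a}w\big)>-\tfrac12\}$ and $\mathcal S(H^a_\gamma)$ denotes the set of $f\in\mathcal S_H$ with $f(\mathbb D)=H^a_\gamma$ (slanted half-plane mappings). Here $\gamma_a=\arg(1+\overline a)$, so $1+a=|1+a|e^{-i\gamma_a}$. *)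

From Stdlib Require Import Reals.
Open Scope R_scope.

Definition Cplx : Type := (R * R)%type.
Definition Re (z : Cplx) : R := fst z.
Definition Im (z : Cplx) : R := snd z.
Definition RtoC (x : R) : Cplx := (x, 0).
Definition Czero : Cplx := (0, 0).
Definition Cone : Cplx := (1, 0).
Definition Cadd (z w : Cplx) : Cplx := (Re z + Re w, Im z + Im w).
Definition Copp (z : Cplx) : Cplx := (- Re z, - Im z).
Definition Csub (z w : Cplx) : Cplx := Cadd z (Copp w).
Definition Cmul (z w : Cplx) : Cplx :=
  (Re z * Re w - Im z * Im w, Re z * Im w + Im z * Re w).
Definition Cconj (z : Cplx) : Cplx := (Re z, - Im z).
Definition Cmod (z : Cplx) : R := sqrt (Re z * Re z + Im z * Im z).
Definition Cinv (z : Cplx) : Cplx :=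
  (Re z / (Re z * Re z + Im z * Im z), - Im z / (Re z * Re z + Im z * Im z)).
Definition Cdiv (z w : Cplx) : Cplx := Cmul z (Cinv w).
Definition Cexpi (t : R) : Cplx := (cos t, sin t).

Definition inD (z : Cplx) : Prop := Cmod z < 1.

Definition has_cderiv (f : Cplx -> Cplx) (z l : Cplx) : Prop :=
  forall eps : R, 0 < eps -> exists delta : R, 0 < delta /\
    forall w : Cplx, 0 < Cmod w < delta ->
      Cmod (Csub (Cdiv (Csub (f (Cadd z w)) (f z)) w) l) < eps.

Definition harm (h g : Cplx -> Cplx) (z : Cplx) : Cplx := Cadd (h z) (Cconj (g z)).

(* f = h + conj g belongs to S_H, given the (complex) derivatives h', g' of
   the analytic functions h, g on D *)
Definition in_SH (h h' g g' : Cplx -> Cplx) : Prop :=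
  (forall z, inD z -> has_cderiv h z (h' z)) /\
  (forall z, inD z -> has_cderiv g z (g' z)) /\
  h Czero = Czero /\ g Czero = Czero /\ h' Czero = Cone /\
  (forall z, inD z -> Cmod (g' z) < Cmod (h' z)) /\
  (forall z1 z2, inD z1 -> inD z2 -> harm h g z1 = harm h g z2 -> z1 = z2).

Definition in_Hag (a : Cplx) (gamma : R) (w : Cplx) : Prop :=
  Re (Cmul (Cdiv (Cexpi gamma) (Cadd Cone a)) w) > - (1/2).

Definition maps_onto_Hag (h g : Cplx -> Cplx) (a : Cplx) (gamma : R) : Prop :=
  forall w, (exists z, inD z /\ harm h g z = w) <-> in_Hag a gamma w.

(* e^{i gamma_a} with gamma_a = arg(1 + conj a), i.e. (1 + conj a)/|1 + conj a| *)
Definition expi_gamma_a (a : Cplx) : Cplx :=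
  Cdiv (Cadd Cone (Cconj a)) (RtoC (Cmod (Cadd Cone (Cconj a)))).

Definition aprime (a : Cplx) : R := Cmod (Cadd Cone a) - 1.

(* With phi = e^{i gamma} / (1 + a), the analytic function k = phi h + conj(phi) g
   satisfies Re (phi f) = Re k, so k maps the disk into the half-plane
   Re w > -1/2 and omega = k / (1 + k) maps the disk into itself with omega(0) = 0.
   The normalisation of g'(0) makes omega'(0) = e^{i (gamma + gamma_a)} unimodular,
   so by the equality case of Schwarz's lemma omega is that rotation, and solving
   for k gives the formula.  Only f(D) being contained in the half-plane, the
   normalisation and the analyticity of h and g are used.

   Schwarz's lemma and its equality case come from the mean value property on
   circles, applied to omega(z)/z composed with disk automorphisms; the mean value
   property in turn comes from Goursat's theorem on polar rectangles. *)

From Coquelicot Require Import Coquelicot.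
From Stdlib Require Import Reals Lra Psatz Lia Arith.
Open Scope R_scope.

(** * Complex arithmetic *)

Ltac Cunfold :=
  unfold Csub, Cdiv, Cadd, Copp, Cmul, Cconj, Cinv, RtoC, Czero, Cone, Cexpi in *;
  unfold Re, Im in *.

Lemma Cplx_ext (z w : Cplx) : Re z = Re w -> Im z = Im w -> z = w.
Proof. destruct z, w; simpl; intros -> ->; reflexivity. Qed.

Ltac Cext := apply Cplx_ext; Cunfold; simpl.

Lemma Cplx_ring : ring_theory Czero Cone Cadd Cmul Csub Copp (@eq Cplx).
Proof. constructor; intros; Cext; ring. Qed.

Add Ring Cplx_ring : Cplx_ring.

Lemma Ceq_dec (z w : Cplx) : {z = w} + {z <> w}.
Proof.
  destruct z as [a b], w as [c d].
  destruct (Req_EM_T a c) as [<-|n]; [destruct (Req_EM_T b d) as [<-|n]|];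
    [left; reflexivity | right; intros E; injection E; auto ..].
Qed.

Definition Cnorm2 (z : Cplx) : R := Re z * Re z + Im z * Im z.

Lemma Cnorm2_ge0 z : 0 <= Cnorm2 z.
Proof. unfold Cnorm2; nra. Qed.

Lemma Cnorm2_mul z w : Cnorm2 (Cmul z w) = Cnorm2 z * Cnorm2 w.
Proof. unfold Cnorm2; destruct z, w; Cunfold; simpl; ring. Qed.

Lemma Cmod_ge0 z : 0 <= Cmod z.
Proof. apply sqrt_pos. Qed.

Lemma Cmod_sqr z : Cmod z * Cmod z = Cnorm2 z.
Proof. apply sqrt_sqrt, Cnorm2_ge0. Qed.

Lemma Cmod_unique z r : 0 <= r -> r * r = Cnorm2 z -> Cmod z = r.
Proof. intros Hr E; unfold Cmod; fold (Cnorm2 z); rewrite <- E; apply sqrt_square, Hr. Qed.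

Lemma Cmod_le_of_Cnorm2 z r : 0 <= r -> Cnorm2 z <= r * r -> Cmod z <= r.
Proof.
  intros Hr H. apply Rsqr_incr_0_var; auto. unfold Rsqr; rewrite Cmod_sqr; exact H.
Qed.

Lemma Cmod_lt1_Cnorm2 z : Cmod z < 1 <-> Cnorm2 z < 1.
Proof. rewrite <- Cmod_sqr; pose proof (Cmod_ge0 z); split; intros; nra. Qed.

Lemma Cmod_mul z w : Cmod (Cmul z w) = Cmod z * Cmod w.
Proof.
  apply Cmod_unique; [apply Rmult_le_pos; apply Cmod_ge0|].
  rewrite Cnorm2_mul, <- !Cmod_sqr; ring.
Qed.

Lemma Rabs_Re_le z : Rabs (Re z) <= Cmod z.
Proof.
  rewrite <- Rabs_right by apply Rle_ge, Cmod_ge0.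
  apply Rsqr_le_abs_0; unfold Rsqr; rewrite Cmod_sqr; unfold Cnorm2; nra.
Qed.

Lemma Rabs_Im_le z : Rabs (Im z) <= Cmod z.
Proof.
  rewrite <- Rabs_right by apply Rle_ge, Cmod_ge0.
  apply Rsqr_le_abs_0; unfold Rsqr; rewrite Cmod_sqr; unfold Cnorm2; nra.
Qed.

Lemma Cmod_le_Rabs_Re_Im z : Cmod z <= Rabs (Re z) + Rabs (Im z).
Proof.
  pose proof (Rabs_pos (Re z)); pose proof (Rabs_pos (Im z)).
  apply Cmod_le_of_Cnorm2; [lra|]. unfold Cnorm2.
  pose proof (Rsqr_abs (Re z)); pose proof (Rsqr_abs (Im z)); unfold Rsqr in *. nra.
Qed.

Lemma Cmod_opp z : Cmod (Copp z) = Cmod z.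
Proof. unfold Cmod; Cunfold; simpl; f_equal; ring. Qed.

Lemma Cmod_conj z : Cmod (Cconj z) = Cmod z.
Proof. unfold Cmod; Cunfold; simpl; f_equal; ring. Qed.

Lemma Cmod_triangle z w : Cmod (Cadd z w) <= Cmod z + Cmod w.
Proof.
  pose proof (Cmod_ge0 z); pose proof (Cmod_ge0 w).
  apply Cmod_le_of_Cnorm2; [lra|].
  assert (CS : Re z * Re w + Im z * Im w <= Cmod z * Cmod w).
  { rewrite <- (Cmod_conj z), <- Cmod_mul.
    replace (Re z * Re w + Im z * Im w) with (Re (Cmul (Cconj z) w)) by (destruct z, w; Cunfold; simpl; ring).
    eapply Rle_trans; [apply Rle_abs|apply Rabs_Re_le]. }
  pose proof (Cmod_sqr z); pose proof (Cmod_sqr w).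
  destruct z, w; unfold Cnorm2 in *; Cunfold; simpl in *; nra.
Qed.

Lemma Cmod_sub_sym z w : Cmod (Csub z w) = Cmod (Csub w z).
Proof. replace (Csub z w) with (Copp (Csub w z)) by ring; apply Cmod_opp. Qed.

Lemma Cmod_RtoC r : Cmod (RtoC r) = Rabs r.
Proof.
  apply Cmod_unique; [apply Rabs_pos|]. unfold Cnorm2; Cunfold; simpl.
  rewrite <- Rabs_mult, Rabs_right; nra.
Qed.

Lemma Cmod_zero : Cmod Czero = 0.
Proof. apply Cmod_unique; unfold Cnorm2; Cunfold; simpl; lra. Qed.

Lemma Cmod_one : Cmod Cone = 1.
Proof. apply Cmod_unique; unfold Cnorm2; Cunfold; simpl; lra. Qed.

Lemma Cmod_expi t : Cmod (Cexpi t) = 1.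
Proof.
  apply Cmod_unique; [lra|]. unfold Cnorm2; Cunfold; simpl.
  pose proof (sin2_cos2 t); unfold Rsqr in *; lra.
Qed.

Lemma Cnorm2_eq0 z : Cnorm2 z = 0 -> z = Czero.
Proof. unfold Cnorm2; destruct z; Cunfold; simpl; intros; apply Cplx_ext; simpl; nra. Qed.

Lemma Cmod_eq0 z : Cmod z = 0 -> z = Czero.
Proof. intros H; apply Cnorm2_eq0; rewrite <- Cmod_sqr, H; ring. Qed.

Lemma Cnorm2_pos z : z <> Czero -> 0 < Cnorm2 z.
Proof.
  intros nz; destruct (Cnorm2_ge0 z) as [|E]; auto.
  symmetry in E; apply Cnorm2_eq0 in E; contradiction.
Qed.

Lemma Cmod_pos z : z <> Czero -> 0 < Cmod z.
Proof. intros nz; pose proof (Cnorm2_pos z nz); pose proof (Cmod_sqr z); pose proof (Cmod_ge0 z); nra. Qed.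

Lemma Cmod_reverse_triangle z w : Cmod z - Cmod w <= Cmod (Csub z w).
Proof.
  pose proof (Cmod_triangle (Csub z w) w).
  replace (Cadd (Csub z w) w) with z in H by ring. lra.
Qed.

Lemma Cinv_l z : z <> Czero -> Cmul (Cinv z) z = Cone.
Proof.
  intros nz; pose proof (Cnorm2_pos z nz); unfold Cnorm2 in *.
  destruct z; Cunfold; simpl in *; apply Cplx_ext; simpl; field; lra.
Qed.

Lemma Cinv_r z : z <> Czero -> Cmul z (Cinv z) = Cone.
Proof. intros nz; rewrite <- (Cinv_l z nz); ring. Qed.

Lemma Cnorm2_inv z : z <> Czero -> Cnorm2 (Cinv z) = / Cnorm2 z.
Proof.
  intros nz. pose proof (Cnorm2_pos z nz).
  assert (E : Cnorm2 (Cinv z) * Cnorm2 z = 1).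
  { rewrite <- Cnorm2_mul, Cinv_l by auto. unfold Cnorm2; Cunfold; simpl; ring. }
  field_simplify_eq; lra.
Qed.

Lemma Cmod_inv z : z <> Czero -> Cmod (Cinv z) = / Cmod z.
Proof.
  intros nz. pose proof (Cmod_pos z nz).
  assert (Cmod (Cinv z) * Cmod z = 1) by (rewrite <- Cmod_mul, Cinv_l by auto; apply Cmod_one).
  field_simplify_eq; lra.
Qed.

Lemma Cmod_div z w : w <> Czero -> Cmod (Cdiv z w) = Cmod z / Cmod w.
Proof. intros nw; unfold Cdiv; rewrite Cmod_mul, Cmod_inv; auto. Qed.

Lemma Cmul_div_cancel z w : w <> Czero -> Cmul (Cdiv z w) w = z.
Proof.
  intros nw; unfold Cdiv; transitivity (Cmul z (Cmul (Cinv w) w)); [ring|].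
  rewrite Cinv_l by auto; ring.
Qed.

Lemma Csub_eq0 z w : Csub z w = Czero -> z = w.
Proof. intros E; replace z with (Cadd (Csub z w) w) by ring; rewrite E; ring. Qed.

Lemma Cconj_mul_RtoC r z : Cconj (Cmul (RtoC r) z) = Cmul (RtoC r) (Cconj z).
Proof. Cext; ring. Qed.

Lemma Cconj_mul_self S : Cnorm2 S = 1 -> Cmul (Cconj S) S = Cone.
Proof. unfold Cnorm2; intros H. Cext; [nra|ring]. Qed.

Lemma eq_Cdiv_of_Cmul w d q : d <> Czero -> Cmul q d = w -> q = Cdiv w d.
Proof.
  intros nd E. rewrite <- E. unfold Cdiv.
  transitivity (Cmul q (Cmul d (Cinv d))); [rewrite Cinv_r by auto|]; ring.
Qed.

(** * Continuity and complex differentiability *)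

Definition Ccontinuous (f : Cplx -> Cplx) (z : Cplx) : Prop :=
  forall e, 0 < e -> exists d, 0 < d /\
    forall w, Cmod (Csub w z) < d -> Cmod (Csub (f w) (f z)) < e.

Lemma Ccontinuous_const c z : Ccontinuous (fun _ => c) z.
Proof.
  intros e he; exists 1; split; [lra|]; intros.
  replace (Csub c c) with Czero by ring; rewrite Cmod_zero; auto.
Qed.

Lemma Ccontinuous_id z : Ccontinuous (fun w => w) z.
Proof. intros e he; exists e; split; auto. Qed.

Lemma Ccontinuous_add f g z :
  Ccontinuous f z -> Ccontinuous g z -> Ccontinuous (fun w => Cadd (f w) (g w)) z.
Proof.
  intros Hf Hg e he.
  destruct (Hf (e/2)) as [d1 [h1 H1]]; [lra|]. destruct (Hg (e/2)) as [d2 [h2 H2]]; [lra|].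
  exists (Rmin d1 d2); split; [apply Rmin_pos; auto|]. intros w Hw.
  replace (Csub (Cadd (f w) (g w)) (Cadd (f z) (g z)))
    with (Cadd (Csub (f w) (f z)) (Csub (g w) (g z))) by ring.
  eapply Rle_lt_trans; [apply Cmod_triangle|].
  specialize (H1 w (Rlt_le_trans _ _ _ Hw (Rmin_l _ _))).
  specialize (H2 w (Rlt_le_trans _ _ _ Hw (Rmin_r _ _))). lra.
Qed.

Lemma Ccontinuous_mul f g z :
  Ccontinuous f z -> Ccontinuous g z -> Ccontinuous (fun w => Cmul (f w) (g w)) z.
Proof.
  intros Hf Hg e he.
  set (M := Cmod (f z) + 1 + Cmod (g z)).
  assert (hM : 0 < M) by (unfold M; pose proof (Cmod_ge0 (f z)); pose proof (Cmod_ge0 (g z)); lra).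
  set (eps := Rmin 1 (e / (3 * M))).
  assert (heps : 0 < eps) by (apply Rmin_pos; [lra|apply Rdiv_lt_0_compat; lra]).
  assert (heps1 : eps <= 1) by apply Rmin_l.
  assert (heps2 : eps <= e / (3 * M)) by apply Rmin_r.
  destruct (Hf eps heps) as [d1 [h1 H1]]. destruct (Hg eps heps) as [d2 [h2 H2]].
  exists (Rmin d1 d2); split; [apply Rmin_pos; auto|]. intros w Hw.
  specialize (H1 w (Rlt_le_trans _ _ _ Hw (Rmin_l _ _))).
  specialize (H2 w (Rlt_le_trans _ _ _ Hw (Rmin_r _ _))).
  assert (Hfw : Cmod (f w) <= Cmod (f z) + 1).
  { pose proof (Cmod_reverse_triangle (f w) (f z)); lra. }
  replace (Csub (Cmul (f w) (g w)) (Cmul (f z) (g z))) with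
    (Cadd (Cmul (f w) (Csub (g w) (g z))) (Cmul (Csub (f w) (f z)) (g z))) by ring.
  eapply Rle_lt_trans; [apply Cmod_triangle|]. rewrite !Cmod_mul.
  pose proof (Cmod_ge0 (g z)); pose proof (Cmod_ge0 (Csub (g w) (g z))).
  pose proof (Cmod_ge0 (f w)); pose proof (Cmod_ge0 (Csub (f w) (f z))).
  assert (Cmod (f w) * Cmod (Csub (g w) (g z)) <= M * eps) by (apply Rmult_le_compat; unfold M in *; lra).
  assert (Cmod (Csub (f w) (f z)) * Cmod (g z) <= eps * M) by (apply Rmult_le_compat; unfold M in *; lra).
  assert (M * eps <= e / 3) by (apply Rle_trans with (M * (e / (3 * M))); [apply Rmult_le_compat_l; lra|right; field; lra]).
  lra.
Qed.

Lemma Ccontinuous_comp f g z :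
  Ccontinuous g z -> Ccontinuous f (g z) -> Ccontinuous (fun w => f (g w)) z.
Proof.
  intros Hg Hf e he. destruct (Hf e he) as [d1 [h1 H1]]. destruct (Hg d1 h1) as [d2 [h2 H2]].
  exists d2; split; auto.
Qed.

Lemma Ccontinuous_inv f z :
  Ccontinuous f z -> f z <> Czero -> Ccontinuous (fun w => Cinv (f w)) z.
Proof.
  intros Hf Hnz e he. set (m := Cmod (f z)). assert (hm : 0 < m) by (apply Cmod_pos; auto).
  destruct (Hf (Rmin (m/2) (e * m * m / 2))) as [d [hd H]].
  { apply Rmin_pos; [lra|]. apply Rdiv_lt_0_compat; [|lra]. repeat apply Rmult_lt_0_compat; auto. }
  exists d; split; auto. intros w Hw. specialize (H w Hw).
  assert (H1 : Cmod (Csub (f w) (f z)) < m/2) by (eapply Rlt_le_trans; [apply H|apply Rmin_l]).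
  assert (H2 : Cmod (Csub (f w) (f z)) < e*m*m/2) by (eapply Rlt_le_trans; [apply H|apply Rmin_r]).
  assert (hw : m/2 < Cmod (f w))
    by (pose proof (Cmod_reverse_triangle (f z) (f w)); rewrite Cmod_sub_sym in H1; unfold m in *; lra).
  assert (nw : f w <> Czero) by (intros E; rewrite E, Cmod_zero in hw; lra).
  replace (Csub (Cinv (f w)) (Cinv (f z)))
    with (Cmul (Csub (f z) (f w)) (Cmul (Cinv (f w)) (Cinv (f z)))).
  2: { transitivity (Csub (Cmul (Cinv (f w)) (Cmul (f z) (Cinv (f z))))
                           (Cmul (Cmul (Cinv (f w)) (f w)) (Cinv (f z)))); [ring|].
       rewrite Cinv_l, Cinv_r by auto. ring. }
  rewrite !Cmod_mul, !Cmod_inv by auto. fold m. rewrite Cmod_sub_sym.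
  assert (hi : / Cmod (f w) <= 2/m)
    by (replace (2/m) with (/(m/2)) by (field; lra); apply Rinv_le_contravar; lra).
  assert (0 < /m) by (apply Rinv_0_lt_compat; lra).
  assert (0 <= / Cmod (f w)) by (left; apply Rinv_0_lt_compat; lra).
  apply Rle_lt_trans with (Cmod (Csub (f w) (f z)) * (2/m * /m)).
  { apply Rmult_le_compat_l; [apply Cmod_ge0|]. apply Rmult_le_compat_r; lra. }
  apply Rlt_le_trans with (e*m*m/2 * (2/m * /m)).
  { apply Rmult_lt_compat_r; auto. apply Rmult_lt_0_compat; auto. apply Rdiv_lt_0_compat; lra. }
  right; field; lra.
Qed.

Definition caratheodory (f : Cplx -> Cplx) (z l : Cplx) : Prop :=
  exists phi r, 0 < r /\
    (forall w, Cmod (Csub w z) < r -> f w = Cadd (f z) (Cmul (phi w) (Csub w z))) /\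
    phi z = l /\ Ccontinuous phi z.

Lemma caratheodory_has_cderiv f z l : caratheodory f z l -> has_cderiv f z l.
Proof.
  intros [phi [r [hr [Hf [Hl Hc]]]]] e he. destruct (Hc e he) as [d [hd H]].
  exists (Rmin d r); split; [apply Rmin_pos; auto|].
  intros w [hw1 hw2]. assert (nw : w <> Czero) by (intros E; rewrite E, Cmod_zero in hw1; lra).
  assert (Ew : Csub (Cadd z w) z = w) by ring.
  rewrite (Hf (Cadd z w)) by (rewrite Ew; exact (Rlt_le_trans _ _ _ hw2 (Rmin_r _ _))).
  rewrite Ew.
  replace (Cdiv (Csub (Cadd (f z) (Cmul (phi (Cadd z w)) w)) (f z)) w) with (phi (Cadd z w)).
  - rewrite <- Hl. apply H. rewrite Ew. exact (Rlt_le_trans _ _ _ hw2 (Rmin_l _ _)).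
  - unfold Cdiv. transitivity (Cmul (phi (Cadd z w)) (Cmul w (Cinv w))); [rewrite Cinv_r by auto; ring|ring].
Qed.

Lemma has_cderiv_caratheodory f z l : has_cderiv f z l -> caratheodory f z l.
Proof.
  intros Hd.
  exists (fun w => if Ceq_dec w z then l else Cdiv (Csub (f w) (f z)) (Csub w z)), 1.
  split; [lra|split; [|split]].
  - intros w _. destruct (Ceq_dec w z) as [->|n].
    + ring.
    + assert (nz : Csub w z <> Czero) by (intros E; apply n, Csub_eq0, E).
      rewrite Cmul_div_cancel by auto. ring.
  - destruct (Ceq_dec z z); [auto|contradiction].
  - intros e he. destruct (Hd e he) as [d [hd H]]. exists d; split; auto. intros w Hw.
    destruct (Ceq_dec z z) as [_|c]; [|contradiction].
    destruct (Ceq_dec w z) as [->|n].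
    + replace (Csub l l) with Czero by ring. rewrite Cmod_zero; auto.
    + assert (nz : Csub w z <> Czero) by (intros E; apply n, Csub_eq0, E).
      specialize (H (Csub w z) (conj (Cmod_pos _ nz) Hw)).
      replace (Cadd z (Csub w z)) with w in H by ring. auto.
Qed.

Lemma caratheodory_continuous f z l : caratheodory f z l -> Ccontinuous f z.
Proof.
  intros [phi [r [hr [Hf [Hl Hc]]]]].
  assert (Hc' : Ccontinuous (fun w => Cadd (f z) (Cmul (phi w) (Csub w z))) z).
  { apply Ccontinuous_add; [apply Ccontinuous_const|]. apply Ccontinuous_mul; auto.
    intros e he; exists e; split; auto; intros w Hw.
    replace (Csub (Csub w z) (Csub z z)) with (Csub w z) by ring. auto. }
  intros e he. destruct (Hc' e he) as [d [hd H]].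
  exists (Rmin d r); split; [apply Rmin_pos; auto|]. intros w Hw.
  specialize (H w (Rlt_le_trans _ _ _ Hw (Rmin_l _ _))).
  assert (z0 : Cmod (Csub z z) < r) by (replace (Csub z z) with Czero by ring; rewrite Cmod_zero; auto).
  rewrite <- (Hf w (Rlt_le_trans _ _ _ Hw (Rmin_r _ _))), <- (Hf z z0) in H. auto.
Qed.

Lemma has_cderiv_continuous f z l : has_cderiv f z l -> Ccontinuous f z.
Proof. intros; eapply caratheodory_continuous, has_cderiv_caratheodory; eauto. Qed.

Lemma has_cderiv_const c z : has_cderiv (fun _ => c) z Czero.
Proof.
  apply caratheodory_has_cderiv. exists (fun _ => Czero), 1.
  repeat split; [lra|intros; ring|apply Ccontinuous_const].
Qed.

Lemma has_cderiv_id z : has_cderiv (fun w => w) z Cone.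
Proof.
  apply caratheodory_has_cderiv. exists (fun _ => Cone), 1.
  repeat split; [lra|intros; ring|apply Ccontinuous_const].
Qed.

Lemma has_cderiv_add f g z lf lg : has_cderiv f z lf -> has_cderiv g z lg ->
  has_cderiv (fun w => Cadd (f w) (g w)) z (Cadd lf lg).
Proof.
  intros Hf Hg.
  apply has_cderiv_caratheodory in Hf as [pf [rf [hrf [Ef [Lf Cf]]]]].
  apply has_cderiv_caratheodory in Hg as [pg [rg [hrg [Eg [Lg Cg]]]]].
  apply caratheodory_has_cderiv. exists (fun w => Cadd (pf w) (pg w)), (Rmin rf rg).
  split; [apply Rmin_pos; auto|split; [|split]].
  - intros w Hw. rewrite (Ef w (Rlt_le_trans _ _ _ Hw (Rmin_l _ _))), (Eg w (Rlt_le_trans _ _ _ Hw (Rmin_r _ _))).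
    ring.
  - rewrite Lf, Lg; auto.
  - apply Ccontinuous_add; auto.
Qed.

Lemma has_cderiv_mul f g z lf lg : has_cderiv f z lf -> has_cderiv g z lg ->
  has_cderiv (fun w => Cmul (f w) (g w)) z (Cadd (Cmul lf (g z)) (Cmul (f z) lg)).
Proof.
  intros Hf Hg. pose proof (has_cderiv_continuous _ _ _ Hg) as Cg'.
  apply has_cderiv_caratheodory in Hf as [pf [rf [hrf [Ef [Lf Cf]]]]].
  apply has_cderiv_caratheodory in Hg as [pg [rg [hrg [Eg [Lg Cg]]]]].
  apply caratheodory_has_cderiv.
  exists (fun w => Cadd (Cmul (pf w) (g w)) (Cmul (f z) (pg w))), (Rmin rf rg).
  split; [apply Rmin_pos; auto|split; [|split]].
  - intros w Hw. rewrite (Ef w (Rlt_le_trans _ _ _ Hw (Rmin_l _ _))).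
    rewrite (Eg w (Rlt_le_trans _ _ _ Hw (Rmin_r _ _))). ring.
  - rewrite Lf, Lg; auto.
  - apply Ccontinuous_add; apply Ccontinuous_mul; auto; apply Ccontinuous_const.
Qed.

Lemma has_cderiv_comp f g z lf lg : has_cderiv g z lg -> has_cderiv f (g z) lf ->
  has_cderiv (fun w => f (g w)) z (Cmul lf lg).
Proof.
  intros Hg Hf. pose proof (has_cderiv_continuous _ _ _ Hg) as Cg'.
  apply has_cderiv_caratheodory in Hf as [pf [rf [hrf [Ef [Lf Cf]]]]].
  apply has_cderiv_caratheodory in Hg as [pg [rg [hrg [Eg [Lg Cg]]]]].
  destruct (Cg' rf hrf) as [d [hd Hd]].
  apply caratheodory_has_cderiv. exists (fun w => Cmul (pf (g w)) (pg w)), (Rmin d rg).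
  split; [apply Rmin_pos; auto|split; [|split]].
  - intros w Hw. rewrite (Ef (g w) (Hd w (Rlt_le_trans _ _ _ Hw (Rmin_l _ _)))).
    rewrite (Eg w (Rlt_le_trans _ _ _ Hw (Rmin_r _ _))). ring.
  - rewrite Lf, Lg; auto.
  - apply Ccontinuous_mul; auto. apply Ccontinuous_comp; auto.
Qed.

Lemma has_cderiv_inv f z l : has_cderiv f z l -> f z <> Czero ->
  has_cderiv (fun w => Cinv (f w)) z (Copp (Cmul l (Cinv (Cmul (f z) (f z))))).
Proof.
  intros Hf Hnz. pose proof (has_cderiv_continuous _ _ _ Hf) as Cf'.
  apply has_cderiv_caratheodory in Hf as [pf [rf [hrf [Ef [Lf Cf]]]]].
  destruct (Cf' (Cmod (f z))) as [d [hd Hd]]; [apply Cmod_pos; auto|].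
  apply caratheodory_has_cderiv.
  exists (fun w => Copp (Cmul (pf w) (Cmul (Cinv (f w)) (Cinv (f z))))), (Rmin d rf).
  split; [apply Rmin_pos; auto|split; [|split]].
  - intros w Hw.
    assert (nw : f w <> Czero).
    { intros E. specialize (Hd w (Rlt_le_trans _ _ _ Hw (Rmin_l _ _))).
      rewrite E, Cmod_sub_sym in Hd. replace (Csub (f z) Czero) with (f z) in Hd by ring. lra. }
    assert (E : Cmul (pf w) (Csub w z) = Csub (f w) (f z))
      by (rewrite (Ef w (Rlt_le_trans _ _ _ Hw (Rmin_r _ _))); ring).
    transitivity (Cadd (Cinv (f z))
      (Copp (Cmul (Cmul (pf w) (Csub w z)) (Cmul (Cinv (f w)) (Cinv (f z)))))); [|ring].
    rewrite E.
    transitivity (Cadd (Cinv (f z)) (Csub (Cmul (Cinv (f w)) (Cmul (f z) (Cinv (f z))))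
                                          (Cmul (Cmul (Cinv (f w)) (f w)) (Cinv (f z))))); [|ring].
    rewrite Cinv_l, Cinv_r by auto. ring.
  - rewrite Lf. f_equal. f_equal.
    pose proof (Cnorm2_pos _ Hnz). unfold Cnorm2 in *.
    destruct (f z); Cunfold; simpl in *; apply Cplx_ext; simpl; field; split; nra.
  - apply (Ccontinuous_comp Copp (fun w => Cmul (pf w) (Cmul (Cinv (f w)) (Cinv (f z))))).
    + apply Ccontinuous_mul; auto. apply Ccontinuous_mul; [apply Ccontinuous_inv; auto|apply Ccontinuous_const].
    + intros e he; exists e; split; auto; intros w Hw.
      replace (Csub (Copp w) (Copp (Cmul (pf z) (Cmul (Cinv (f z)) (Cinv (f z))))))
        with (Copp (Csub w (Cmul (pf z) (Cmul (Cinv (f z)) (Cinv (f z)))))) by ring.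
      rewrite Cmod_opp; auto.
Qed.

Lemma has_cderiv_scale c f z l : has_cderiv f z l -> has_cderiv (fun w => Cmul c (f w)) z (Cmul c l).
Proof.
  intros H. pose proof (has_cderiv_mul (fun _ => c) f z Czero l (has_cderiv_const c z) H) as H'.
  cbv beta in H'. replace (Cadd (Cmul Czero (f z)) (Cmul c l)) with (Cmul c l) in H' by ring. exact H'.
Qed.

Lemma has_cderiv_ext f g z l r : 0 < r -> (forall w, Cmod (Csub w z) < r -> f w = g w) ->
  has_cderiv f z l -> has_cderiv g z l.
Proof.
  intros hr E H e he. destruct (H e he) as [d [hd Hd]].
  exists (Rmin d r); split; [apply Rmin_pos; auto|].
  intros w [h1 h2]. rewrite <- !E. apply Hd; split; auto. eapply Rlt_le_trans; [apply h2|apply Rmin_l].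
  - replace (Csub z z) with Czero by ring; rewrite Cmod_zero; auto.
  - replace (Csub (Cadd z w) z) with w by ring. eapply Rlt_le_trans; [apply h2|apply Rmin_r].
Qed.

(** * Real integrals *)

(* Coquelicot's lemmas on [RInt], restated on [R] with [+], [-] and [*] in place of
   the normed-module operations, so that [ring] and [lra] apply to the results. *)

Lemma RInt_Chasles_R (f : R -> R) a m b :
  ex_RInt f a m -> ex_RInt f m b -> RInt f a b = RInt f a m + RInt f m b.
Proof. intros H1 H2. rewrite <- (RInt_Chasles f a m b H1 H2). reflexivity. Qed.

Lemma RInt_plus_R (f g : R -> R) a b : ex_RInt f a b -> ex_RInt g a b ->
  RInt (fun x => f x + g x) a b = RInt f a b + RInt g a b.
Proof. intros H1 H2. exact (@RInt_plus R_CompleteNormedModule f g a b H1 H2). Qed.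

Lemma RInt_scal_R (f : R -> R) k a b : ex_RInt f a b -> RInt (fun x => k * f x) a b = k * RInt f a b.
Proof. intros H. exact (@RInt_scal R_CompleteNormedModule f a b k H). Qed.

Lemma Rabs_RInt_sub_le (f g : R -> R) a c M : a <= c -> ex_RInt f a c -> ex_RInt g a c ->
  (forall t, a <= t <= c -> Rabs (f t - g t) <= M) -> Rabs (RInt f a c - RInt g a c) <= (c - a) * M.
Proof.
  intros hac H1 H2 H. change (RInt f a c - RInt g a c) with (minus (RInt f a c) (RInt g a c)).
  rewrite <- (@RInt_minus R_CompleteNormedModule f g a c H1 H2).
  apply abs_RInt_le_const; auto. apply (@ex_RInt_minus R_CompleteNormedModule); auto.
Qed.

Lemma RInt_of_derive (f df : R -> R) a b :
  (forall t, is_derive f t (df t)) -> (forall t, ex_derive df t) -> RInt df a b = f b - f a.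
Proof.
  intros H1 H2. apply is_RInt_unique.
  apply (@is_RInt_derive R_CompleteNormedModule); intros; auto.
  exact (ex_derive_continuous df x (H2 x)).
Qed.

Lemma RInt_eq0_nonneg_left (f : R -> R) a b : a < b ->
  (forall t, a <= t <= b -> continuous f t) -> (forall t, a <= t <= b -> 0 <= f t) ->
  RInt f a b = 0 -> f a = 0.
Proof.
  intros hab Hc Hp Hi. destruct (Hp a ltac:(lra)) as [h|h]; [|auto]. exfalso.
  pose proof (Hc a ltac:(lra)) as Ca. apply continuity_pt_filterlim in Ca.
  destruct (Ca (f a / 2)) as [d [hd Hd]]; [lra|].
  set (c := Rmin (a + d / 2) b).
  assert (hc : a < c <= b) by (unfold c; split; [apply Rmin_glb_lt; lra|apply Rmin_r]).
  assert (hca : c <= a + d / 2) by apply Rmin_l.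
  assert (ex : forall x y, a <= x -> x <= y -> y <= b -> ex_RInt f x y).
  { intros x y h1 h2 h3. apply (@ex_RInt_continuous R_CompleteNormedModule). intros z hz.
    rewrite Rmin_left, Rmax_right in hz by lra. apply Hc; lra. }
  rewrite (RInt_Chasles_R f a c b) in Hi by (apply ex; lra).
  assert (I1 : RInt (fun _ => f a / 2) a c <= RInt f a c).
  { apply RInt_le; [lra|apply ex_RInt_const|apply ex; lra|]. intros x hx.
    assert (Hx : Rabs (f x - f a) < f a / 2).
    { apply (Hd x). split; [unfold D_x, no_cond; split; auto; lra|].
      unfold R_dist; simpl; unfold R_dist. apply Rabs_lt_between'. lra. }
    apply Rabs_lt_between' in Hx. lra. }
  rewrite RInt_const in I1. unfold scal in I1; simpl in I1; unfold mult in I1; simpl in I1.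
  assert (I2 : 0 <= RInt f c b) by (apply RInt_ge_0; [lra|apply ex; lra|intros x hx; apply Hp; lra]).
  assert (0 < (c - a) * (f a / 2)) by (apply Rmult_lt_0_compat; lra). lra.
Qed.

(** * Polar rectangles and Goursat's theorem *)

Definition part (re : bool) (z : Cplx) : R := if re then Re z else Im z.

Lemma part_add re z w : part re (Cadd z w) = part re z + part re w.
Proof. destruct re; reflexivity. Qed.

Lemma part_sub re z w : part re (Csub z w) = part re z - part re w.
Proof. destruct re; unfold part; Cunfold; simpl; ring. Qed.

Lemma Rabs_part_le re z : Rabs (part re z) <= Cmod z.
Proof. destruct re; [apply Rabs_Re_le|apply Rabs_Im_le]. Qed.

Lemma Rabs_part_sub_le re z w : Rabs (part re z - part re w) <= Cmod (Csub z w).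
Proof. rewrite <- part_sub; apply Rabs_part_le. Qed.

Definition polar (r t : R) : Cplx := (r * cos t, r * sin t).

Definition polar_dt (r t : R) : Cplx := (- (r * sin t), r * cos t).

Lemma Cmod_polar r t : 0 <= r -> Cmod (polar r t) = r.
Proof.
  intros hr. apply Cmod_unique; auto. unfold Cnorm2, polar; simpl.
  pose proof (sin2_cos2 t); unfold Rsqr in *. nra.
Qed.

Lemma polar_neq0 r t : 0 < r -> polar r t <> Czero.
Proof. intros hr E. apply (f_equal Cmod) in E. rewrite Cmod_polar, Cmod_zero in E; lra. Qed.

Lemma Cmod_polar_dt r t : Cmod (polar_dt r t) = Rabs r.
Proof.
  apply Cmod_unique; [apply Rabs_pos|]. unfold Cnorm2, polar_dt; simpl.
  rewrite <- Rabs_mult, Rabs_right by nra. pose proof (sin2_cos2 t); unfold Rsqr in *. nra.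
Qed.

Lemma Rabs_cos_sub_le a b : Rabs (cos a - cos b) <= Rabs (a - b).
Proof.
  destruct (MVT_abs cos (fun x => - sin x) b a) as [c [H _]].
  { intros; apply derivable_pt_lim_cos. }
  rewrite H, Rabs_Ropp. pose proof (SIN_bound c). pose proof (Rabs_pos (a - b)).
  rewrite <- (Rmult_1_l (Rabs (a - b))) at 2. apply Rmult_le_compat_r; auto. apply Rabs_le; lra.
Qed.

Lemma Rabs_sin_sub_le a b : Rabs (sin a - sin b) <= Rabs (a - b).
Proof.
  destruct (MVT_abs sin cos b a) as [c [H _]].
  { intros; apply derivable_pt_lim_sin. }
  rewrite H. pose proof (COS_bound c). pose proof (Rabs_pos (a - b)).
  rewrite <- (Rmult_1_l (Rabs (a - b))) at 2. apply Rmult_le_compat_r; auto. apply Rabs_le; lra.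
Qed.

Lemma polar_lipschitz r t r' t' :
  Cmod (Csub (polar r t) (polar r' t')) <= 2 * Rabs (r - r') + 2 * Rabs r' * Rabs (t - t').
Proof.
  eapply Rle_trans; [apply Cmod_le_Rabs_Re_Im|]. unfold polar; Cunfold; simpl.
  replace (r * cos t + - (r' * cos t')) with ((r - r') * cos t + r' * (cos t - cos t')) by ring.
  replace (r * sin t + - (r' * sin t')) with ((r - r') * sin t + r' * (sin t - sin t')) by ring.
  pose proof (COS_bound t); pose proof (SIN_bound t).
  pose proof (Rabs_cos_sub_le t t'); pose proof (Rabs_sin_sub_le t t').
  pose proof (Rabs_pos (r - r')); pose proof (Rabs_pos r').
  assert (Rabs ((r - r') * cos t) <= Rabs (r - r'))
    by (rewrite Rabs_mult; rewrite <- (Rmult_1_r (Rabs (r - r'))) at 2;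
        apply Rmult_le_compat_l; auto; apply Rabs_le; lra).
  assert (Rabs ((r - r') * sin t) <= Rabs (r - r'))
    by (rewrite Rabs_mult; rewrite <- (Rmult_1_r (Rabs (r - r'))) at 2;
        apply Rmult_le_compat_l; auto; apply Rabs_le; lra).
  assert (Rabs (r' * (cos t - cos t')) <= Rabs r' * Rabs (t - t'))
    by (rewrite Rabs_mult; apply Rmult_le_compat_l; auto).
  assert (Rabs (r' * (sin t - sin t')) <= Rabs r' * Rabs (t - t'))
    by (rewrite Rabs_mult; apply Rmult_le_compat_l; auto).
  pose proof (Rabs_triang ((r - r') * cos t) (r' * (cos t - cos t'))).
  pose proof (Rabs_triang ((r - r') * sin t) (r' * (sin t - sin t'))). lra.
Qed.

(* Continuity of a path [R -> Cplx], phrased through [Ccontinuous] so that its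
   closure properties carry over. *)
Definition path_continuous (phi : R -> Cplx) (t0 : R) : Prop :=
  Ccontinuous (fun w => phi (Re w)) (RtoC t0).

Lemma path_continuous_intro (phi : R -> Cplx) t0 :
  (forall e, 0 < e -> exists d, 0 < d /\
     forall t, Rabs (t - t0) < d -> Cmod (Csub (phi t) (phi t0)) < e) ->
  path_continuous phi t0.
Proof.
  intros H e he. destruct (H e he) as [d [hd Hd]]. exists d; split; auto. intros w Hw.
  apply Hd. eapply Rle_lt_trans; [|apply Hw]. apply (Rabs_part_sub_le true w (RtoC t0)).
Qed.

Lemma path_continuous_const (v : Cplx) t0 : path_continuous (fun _ => v) t0.
Proof. apply Ccontinuous_const. Qed.

Lemma path_continuous_comp (F : Cplx -> Cplx) gam t0 :
  path_continuous gam t0 -> Ccontinuous F (gam t0) -> path_continuous (fun t => F (gam t)) t0.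
Proof. intros H1 H2. apply (Ccontinuous_comp F (fun w => gam (Re w))); auto. Qed.

Lemma path_continuous_mul f g t0 :
  path_continuous f t0 -> path_continuous g t0 -> path_continuous (fun t => Cmul (f t) (g t)) t0.
Proof. intros; apply (Ccontinuous_mul (fun w => f (Re w)) (fun w => g (Re w))); auto. Qed.

Lemma path_continuous_radius t r0 : path_continuous (fun r => polar r t) r0.
Proof.
  apply path_continuous_intro. intros e he. exists (e/3); split; [lra|]. intros r Hr.
  eapply Rle_lt_trans; [apply polar_lipschitz|].
  replace (t - t) with 0 by ring. rewrite Rabs_R0. lra.
Qed.

Lemma path_continuous_angle r t0 : path_continuous (fun t => polar r t) t0.
Proof.
  apply path_continuous_intro. intros e he.
  pose proof (Rabs_pos r).
  exists (e / (3 * (Rabs r + 1))); split; [apply Rdiv_lt_0_compat; lra|].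
  intros t Ht. eapply Rle_lt_trans; [apply polar_lipschitz|].
  replace (r - r) with 0 by ring. rewrite Rabs_R0. pose proof (Rabs_pos (t - t0)).
  assert (Rabs r * Rabs (t - t0) <= (Rabs r + 1) * (e / (3 * (Rabs r + 1))))
    by (apply Rmult_le_compat; lra).
  assert ((Rabs r + 1) * (e / (3 * (Rabs r + 1))) = e/3) by (field; lra). lra.
Qed.

Lemma path_continuous_polar_dt r t0 : path_continuous (fun t => polar_dt r t) t0.
Proof.
  assert (E : forall t, polar_dt r t = Cmul (polar r t) (0, 1)) by (intros; unfold polar_dt, polar; Cext; ring).
  intros e he. destruct (path_continuous_angle r t0 e he) as [d [hd H]]. exists d; split; auto.
  intros w Hw; specialize (H w Hw). rewrite !E.
  replace (Csub (Cmul (polar r (Re w)) (0, 1)) (Cmul (polar r (Re (RtoC t0))) (0, 1)))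
    with (Cmul (Csub (polar r (Re w)) (polar r (Re (RtoC t0)))) (0, 1)) by ring.
  rewrite Cmod_mul. replace (Cmod (0, 1)) with 1 by (symmetry; apply Cmod_unique; unfold Cnorm2; simpl; lra).
  lra.
Qed.

Lemma continuous_part re phi t0 : path_continuous phi t0 -> continuous (fun t => part re (phi t)) t0.
Proof.
  intros H. apply continuity_pt_filterlim. intros e he. destruct (H e he) as [d [hd Hd]].
  exists d; split; auto. intros t [_ Ht]. unfold R_dist in *; simpl in *; unfold R_dist in *.
  eapply Rle_lt_trans; [apply (Rabs_part_sub_le re (phi t) (phi t0))|]. apply (Hd (RtoC t)).
  replace (Csub (RtoC t) (RtoC t0)) with (RtoC (t - t0)) by (Cext; ring). rewrite Cmod_RtoC. auto.
Qed.

Lemma ex_RInt_part re (phi : R -> Cplx) a b : a <= b ->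
  (forall t, a <= t <= b -> path_continuous phi t) -> ex_RInt (fun t => part re (phi t)) a b.
Proof.
  intros hab H. apply (@ex_RInt_continuous R_CompleteNormedModule). intros z Hz.
  rewrite Rmin_left, Rmax_right in Hz by lra. apply continuous_part; auto.
Qed.

Definition radial_integrand (F : Cplx -> Cplx) (t r : R) : Cplx := Cmul (F (polar r t)) (Cexpi t).
Definition angular_integrand (F : Cplx -> Cplx) (r t : R) : Cplx := Cmul (F (polar r t)) (polar_dt r t).

(* The real ([re = true]) or imaginary part of the integral of [F dz] along the
   positively oriented boundary of the polar rectangle
   [{polar r t | a <= r <= b, c <= t <= d}]. *)
Definition boundary_integral (re : bool) (F : Cplx -> Cplx) (a b c d : R) : R :=
  RInt (fun r => part re (radial_integrand F c r)) a b
  + RInt (fun t => part re (angular_integrand F b t)) c d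
  - RInt (fun r => part re (radial_integrand F d r)) a b
  - RInt (fun t => part re (angular_integrand F a t)) c d.

Definition continuous_on_rect (F : Cplx -> Cplx) (a b c d : R) : Prop :=
  forall r t, a <= r <= b -> c <= t <= d -> Ccontinuous F (polar r t).

Lemma continuous_on_rect_sub F a b c d a' b' c' d' : continuous_on_rect F a b c d ->
  a <= a' -> b' <= b -> c <= c' -> d' <= d -> continuous_on_rect F a' b' c' d'.
Proof. intros H h1 h2 h3 h4 r t Hr Ht. apply H; lra. Qed.

Lemma ex_RInt_radial re F a b c d t : a <= b -> c <= t <= d -> continuous_on_rect F a b c d ->
  ex_RInt (fun r => part re (radial_integrand F t r)) a b.
Proof.
  intros hab ht H. apply ex_RInt_part; auto. intros r hr. apply path_continuous_mul.
  - apply (path_continuous_comp F (fun r => polar r t)); [apply path_continuous_radius|apply H; lra].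
  - apply path_continuous_const.
Qed.

Lemma ex_RInt_angular re F a b c d r : a <= r <= b -> c <= d -> continuous_on_rect F a b c d ->
  ex_RInt (fun t => part re (angular_integrand F r t)) c d.
Proof.
  intros hr hcd H. apply ex_RInt_part; auto. intros t ht. apply path_continuous_mul.
  - apply (path_continuous_comp F (fun t => polar r t)); [apply path_continuous_angle|apply H; lra].
  - apply path_continuous_polar_dt.
Qed.

Lemma boundary_integral_split_radius re F a m b c d : a <= m <= b -> c <= d ->
  continuous_on_rect F a b c d ->
  boundary_integral re F a b c d = boundary_integral re F a m c d + boundary_integral re F m b c d.
Proof.
  intros hm hcd H. unfold boundary_integral.
  rewrite (RInt_Chasles_R (fun r => part re (radial_integrand F c r)) a m b),
          (RInt_Chasles_R (fun r => part re (radial_integrand F d r)) a m b).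
  - ring.
  all: apply (ex_RInt_radial re F _ _ c d); [lra|lra|];
       eapply continuous_on_rect_sub; [exact H|lra..].
Qed.

Lemma boundary_integral_split_angle re F a b c m d : a <= b -> c <= m <= d ->
  continuous_on_rect F a b c d ->
  boundary_integral re F a b c d = boundary_integral re F a b c m + boundary_integral re F a b m d.
Proof.
  intros hab hm H. unfold boundary_integral.
  rewrite (RInt_Chasles_R (fun t => part re (angular_integrand F b t)) c m d),
          (RInt_Chasles_R (fun t => part re (angular_integrand F a t)) c m d).
  - ring.
  all: apply (ex_RInt_angular re F a b _ _); [lra|lra|];
       eapply continuous_on_rect_sub; [exact H|lra..].
Qed.

Definition affine (A B : Cplx) (z : Cplx) : Cplx := Cadd A (Cmul B z).
Definition affine_primitive (A B : Cplx) (z : Cplx) : Cplx :=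
  Cadd (Cmul A z) (Cmul (RtoC (1/2)) (Cmul B (Cmul z z))).

Ltac solve_affine_derive :=
  intros ?; unfold radial_integrand, angular_integrand, affine, affine_primitive, polar, polar_dt, part;
  Cunfold; simpl; auto_derive; try easy; try field.

Lemma RInt_radial_affine re A B t a b :
  RInt (fun r => part re (radial_integrand (affine A B) t r)) a b
  = part re (affine_primitive A B (polar b t)) - part re (affine_primitive A B (polar a t)).
Proof.
  destruct A, B.
  apply (RInt_of_derive (fun r => part re (affine_primitive _ _ (polar r t)))); destruct re; solve_affine_derive.
Qed.

Lemma RInt_angular_affine re A B r c d :
  RInt (fun t => part re (angular_integrand (affine A B) r t)) c d
  = part re (affine_primitive A B (polar r d)) - part re (affine_primitive A B (polar r c)).
Proof.
  destruct A, B.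
  apply (RInt_of_derive (fun t => part re (affine_primitive _ _ (polar r t)))); destruct re; solve_affine_derive.
Qed.

Lemma boundary_integral_affine re A B a b c d : boundary_integral re (affine A B) a b c d = 0.
Proof. unfold boundary_integral. rewrite !RInt_radial_affine, !RInt_angular_affine. ring. Qed.

Lemma Ccontinuous_affine A B z : Ccontinuous (affine A B) z.
Proof.
  apply Ccontinuous_add; [apply Ccontinuous_const|].
  apply Ccontinuous_mul; [apply Ccontinuous_const|apply Ccontinuous_id].
Qed.

Lemma Ccontinuous_sub_affine F A B z :
  Ccontinuous F z -> Ccontinuous (fun w => Csub (F w) (affine A B w)) z.
Proof.
  intros H. apply Ccontinuous_add; auto.
  apply (Ccontinuous_comp Copp (affine A B)); [apply Ccontinuous_affine|].
  intros e he; exists e; split; auto; intros w Hw.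
  replace (Csub (Copp w) (Copp (affine A B z))) with (Copp (Csub w (affine A B z))) by ring.
  rewrite Cmod_opp; auto.
Qed.

Lemma boundary_integral_sub_affine re F A B a b c d : a <= b -> c <= d -> continuous_on_rect F a b c d ->
  boundary_integral re F a b c d = boundary_integral re (fun z => Csub (F z) (affine A B z)) a b c d.
Proof.
  intros hab hcd H.
  set (G := fun z => Csub (F z) (affine A B z)).
  assert (HG : continuous_on_rect G a b c d) by (intros r t hr ht; apply Ccontinuous_sub_affine, H; auto).
  assert (HL : continuous_on_rect (affine A B) a b c d) by (intros r t _ _; apply Ccontinuous_affine).
  assert (Erad : forall t r, part re (radial_integrand F t r)
                   = part re (radial_integrand G t r) + part re (radial_integrand (affine A B) t r))
    by (intros; rewrite <- part_add; unfold G, radial_integrand; f_equal; cbv beta; ring).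
  assert (Eang : forall r t, part re (angular_integrand F r t)
                   = part re (angular_integrand G r t) + part re (angular_integrand (affine A B) r t))
    by (intros; rewrite <- part_add; unfold G, angular_integrand; f_equal; cbv beta; ring).
  rewrite <- (Rplus_0_r (boundary_integral re G a b c d)), <- (boundary_integral_affine re A B a b c d).
  unfold boundary_integral.
  rewrite !(RInt_ext _ _ _ _ (fun r _ => Erad _ r)), !(RInt_ext _ _ _ _ (fun t _ => Eang _ t)).
  rewrite !RInt_plus_R. ring.
  all: first [ apply (ex_RInt_radial re _ a b c d); [lra|lra|assumption]
             | apply (ex_RInt_angular re _ a b c d); [lra|lra|assumption] ].
Qed.

Lemma boundary_integral_bound re G a b c d K : 0 <= a <= b -> c <= d -> continuous_on_rect G a b c d ->
  (forall r t, a <= r <= b -> c <= t <= d -> Cmod (G (polar r t)) <= K) ->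
  Rabs (boundary_integral re G a b c d) <= K * (2 * (b - a) + (a + b) * (d - c)).
Proof.
  intros [ha hab] hcd HG HK.
  assert (K0 : 0 <= K) by (specialize (HK a c ltac:(lra) ltac:(lra)); pose proof (Cmod_ge0 (G (polar a c))); lra).
  assert (Erad : forall t, c <= t <= d -> Rabs (RInt (fun r => part re (radial_integrand G t r)) a b) <= (b - a) * K).
  { intros t ht. apply abs_RInt_le_const; auto; [apply (ex_RInt_radial re G a b c d); auto|].
    intros r hr. eapply Rle_trans; [apply Rabs_part_le|].
    unfold radial_integrand. rewrite Cmod_mul, Cmod_expi, Rmult_1_r. apply HK; lra. }
  assert (Eang : forall r, a <= r <= b -> Rabs (RInt (fun t => part re (angular_integrand G r t)) c d) <= (d - c) * (K * r)).
  { intros r hr. apply abs_RInt_le_const; auto; [apply (ex_RInt_angular re G a b c d); auto|].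
    intros t ht. eapply Rle_trans; [apply Rabs_part_le|].
    unfold angular_integrand. rewrite Cmod_mul, Cmod_polar_dt, Rabs_right by lra.
    apply Rmult_le_compat_r; [lra|apply HK; lra]. }
  pose proof (Erad c ltac:(lra)); pose proof (Erad d ltac:(lra)).
  pose proof (Eang a ltac:(lra)); pose proof (Eang b ltac:(lra)).
  unfold boundary_integral.
  match goal with |- Rabs (?x + ?y - ?z - ?w) <= _ =>
    assert (Rabs (x + y - z - w) <= Rabs x + Rabs y + Rabs z + Rabs w)
      by (unfold Rabs; repeat destruct Rcase_abs; lra) end.
  nra.
Qed.

Record polar_rect := PolarRect { rlo : R; rhi : R; tlo : R; thi : R }.

Section Quadrisection.

Variable F : Cplx -> Cplx.

Definition rect_integral (re : bool) (Q : polar_rect) : R :=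
  boundary_integral re F (rlo Q) (rhi Q) (tlo Q) (thi Q).

Definition rect_size (Q : polar_rect) : R := Rabs (rect_integral true Q) + Rabs (rect_integral false Q).

Definition quarter (upper_r upper_t : bool) (Q : polar_rect) : polar_rect :=
  let mr := (rlo Q + rhi Q) / 2 in
  let mt := (tlo Q + thi Q) / 2 in
  PolarRect (if upper_r then mr else rlo Q) (if upper_r then rhi Q else mr)
            (if upper_t then mt else tlo Q) (if upper_t then thi Q else mt).

Definition worst_quarter (Q : polar_rect) : polar_rect :=
  if Rle_dec (rect_size Q) (4 * rect_size (quarter false false Q)) then quarter false false Q else
  if Rle_dec (rect_size Q) (4 * rect_size (quarter false true Q)) then quarter false true Q else
  if Rle_dec (rect_size Q) (4 * rect_size (quarter true false Q)) then quarter true false Q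
  else quarter true true Q.

Lemma rect_size_quarters Q : rlo Q <= rhi Q -> tlo Q <= thi Q ->
  continuous_on_rect F (rlo Q) (rhi Q) (tlo Q) (thi Q) ->
  rect_size Q <= rect_size (quarter false false Q) + rect_size (quarter false true Q)
                 + rect_size (quarter true false Q) + rect_size (quarter true true Q).
Proof.
  destruct Q as [a b c d]; simpl; intros hab hcd H.
  unfold rect_size, rect_integral, quarter; simpl.
  set (m := (a + b) / 2); set (n := (c + d) / 2).
  assert (hm : a <= m <= b) by (unfold m; lra). assert (hn : c <= n <= d) by (unfold n; lra).
  assert (Hsplit : forall re, boundary_integral re F a b c d =
            boundary_integral re F a m c n + boundary_integral re F a m n d
            + (boundary_integral re F m b c n + boundary_integral re F m b n d)).
  { intros re. rewrite (boundary_integral_split_radius re F a m b c d) by auto.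
    rewrite (boundary_integral_split_angle re F a m c n d), (boundary_integral_split_angle re F m b c n d);
      try lra; eapply continuous_on_rect_sub; eauto; lra. }
  assert (Habs4 : forall p q r s, Rabs (p + q + (r + s)) <= Rabs p + Rabs q + Rabs r + Rabs s)
    by (intros; unfold Rabs; repeat destruct Rcase_abs; lra).
  rewrite !Hsplit. pose proof (Habs4 (boundary_integral true F a m c n) (boundary_integral true F a m n d)
    (boundary_integral true F m b c n) (boundary_integral true F m b n d)).
  pose proof (Habs4 (boundary_integral false F a m c n) (boundary_integral false F a m n d)
    (boundary_integral false F m b c n) (boundary_integral false F m b n d)). lra.
Qed.

Lemma rect_size_worst_quarter Q : rlo Q <= rhi Q -> tlo Q <= thi Q ->
  continuous_on_rect F (rlo Q) (rhi Q) (tlo Q) (thi Q) -> rect_size Q <= 4 * rect_size (worst_quarter Q).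
Proof.
  intros h1 h2 h3. pose proof (rect_size_quarters Q h1 h2 h3). unfold worst_quarter.
  repeat destruct Rle_dec; auto. lra.
Qed.

Lemma worst_quarter_geometry Q : rlo Q <= rhi Q -> tlo Q <= thi Q ->
  rlo Q <= rlo (worst_quarter Q) /\ rhi (worst_quarter Q) <= rhi Q /\
  tlo Q <= tlo (worst_quarter Q) /\ thi (worst_quarter Q) <= thi Q /\
  rhi (worst_quarter Q) - rlo (worst_quarter Q) = (rhi Q - rlo Q) / 2 /\
  thi (worst_quarter Q) - tlo (worst_quarter Q) = (thi Q - tlo Q) / 2.
Proof.
  intros h1 h2. unfold worst_quarter.
  repeat destruct Rle_dec; unfold quarter; simpl; repeat split; lra.
Qed.

End Quadrisection.

Lemma has_cderiv_affine_approx F zs l e : has_cderiv F zs l -> 0 < e ->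
  exists d, 0 < d /\ forall z, Cmod (Csub z zs) < d ->
    Cmod (Csub (F z) (affine (Csub (F zs) (Cmul l zs)) l z)) <= e * Cmod (Csub z zs).
Proof.
  intros H he. destruct (H e he) as [d [hd Hd]]. exists d; split; auto. intros z Hz.
  destruct (Ceq_dec z zs) as [->|n].
  - unfold affine. replace (Csub (F zs) (Cadd (Csub (F zs) (Cmul l zs)) (Cmul l zs))) with Czero by ring.
    rewrite Cmod_zero. pose proof (Cmod_ge0 (Csub zs zs)). nra.
  - assert (nz : Csub z zs <> Czero) by (intros E; apply n, Csub_eq0, E).
    specialize (Hd (Csub z zs) (conj (Cmod_pos _ nz) Hz)).
    replace (Cadd zs (Csub z zs)) with z in Hd by ring.
    replace (Csub (F z) (affine (Csub (F zs) (Cmul l zs)) l z))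
      with (Cmul (Csub (Cdiv (Csub (F z) (F zs)) (Csub z zs)) l) (Csub z zs)).
    + rewrite Cmod_mul. apply Rmult_le_compat_r; [apply Cmod_ge0|lra].
    + unfold affine. transitivity (Csub (Cmul (Cdiv (Csub (F z) (F zs)) (Csub z zs)) (Csub z zs))
                                         (Cmul l (Csub z zs))); [ring|].
      rewrite Cmul_div_cancel by auto. ring.
Qed.

Lemma exists_inv_pow2_lt (eta : R) : 0 < eta -> exists k : nat, / 2 ^ k < eta.
Proof.
  intros he. destruct (pow_lt_1_zero (/2) ltac:(rewrite Rabs_right; lra) eta he) as [N HN].
  exists N. specialize (HN N (le_n N)). rewrite <- pow_inv. rewrite Rabs_right in HN; auto.
  apply Rle_ge, pow_le; lra.
Qed.

Section Goursat.

Variable F : Cplx -> Cplx.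
Variables a0 b0 c0 d0 : R.
Hypothesis a0_ge0 : 0 <= a0.
Hypothesis a0_le_b0 : a0 <= b0.
Hypothesis c0_le_d0 : c0 <= d0.
Hypothesis F_derivable : forall r t, a0 <= r <= b0 -> c0 <= t <= d0 -> exists l, has_cderiv F (polar r t) l.

Lemma F_continuous_on_rect : continuous_on_rect F a0 b0 c0 d0.
Proof. intros r t h1 h2. destruct (F_derivable r t h1 h2) as [l Hl]. eapply has_cderiv_continuous; eauto. Qed.

Definition nested_rect (k : nat) : polar_rect := Nat.iter k (worst_quarter F) (PolarRect a0 b0 c0 d0).

Lemma nested_rect_spec k :
  a0 <= rlo (nested_rect k) <= rhi (nested_rect k) /\ rhi (nested_rect k) <= b0 /\
  c0 <= tlo (nested_rect k) <= thi (nested_rect k) /\ thi (nested_rect k) <= d0 /\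
  rhi (nested_rect k) - rlo (nested_rect k) = (b0 - a0) / 2 ^ k /\
  thi (nested_rect k) - tlo (nested_rect k) = (d0 - c0) / 2 ^ k /\
  rect_size F (nested_rect 0) <= 4 ^ k * rect_size F (nested_rect k).
Proof.
  induction k as [|k (h1 & h2 & h3 & h4 & h5 & h6 & h7)].
  - simpl. repeat split; lra.
  - change (nested_rect (S k)) with (worst_quarter F (nested_rect k)).
    assert (hk1 : rlo (nested_rect k) <= rhi (nested_rect k)) by lra.
    assert (hk2 : tlo (nested_rect k) <= thi (nested_rect k)) by lra.
    destruct (worst_quarter_geometry F (nested_rect k) hk1 hk2) as (g1 & g2 & g3 & g4 & g5 & g6).
    pose proof (rect_size_worst_quarter F (nested_rect k) hk1 hk2
      ltac:(eapply continuous_on_rect_sub; [apply F_continuous_on_rect|..]; lra)).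
    assert (0 < 2 ^ k) by (apply pow_lt; lra).
    repeat split; try lra.
    + rewrite g5, h5. simpl. field. lra.
    + rewrite g6, h6. simpl. field. lra.
    + change (4 ^ S k) with (4 * 4 ^ k). pose proof (pow_lt 4 k ltac:(lra)). nra.
Qed.

Lemma nested_rect_mono j k : (j <= k)%nat ->
  rlo (nested_rect j) <= rlo (nested_rect k) /\ rhi (nested_rect k) <= rhi (nested_rect j) /\
  tlo (nested_rect j) <= tlo (nested_rect k) /\ thi (nested_rect k) <= thi (nested_rect j).
Proof.
  induction 1 as [|m _ (h1 & h2 & h3 & h4)]; [lra|].
  destruct (nested_rect_spec m) as (i1 & i2 & i3 & i4 & _).
  change (nested_rect (S m)) with (worst_quarter F (nested_rect m)).
  destruct (worst_quarter_geometry F (nested_rect m) ltac:(lra) ltac:(lra)) as (g1 & g2 & g3 & g4 & _). lra.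
Qed.

Lemma nested_rect_common_point : exists u v,
  (forall k, rlo (nested_rect k) <= u <= rhi (nested_rect k)) /\
  (forall k, tlo (nested_rect k) <= v <= thi (nested_rect k)).
Proof.
  destruct (completeness (fun x => exists k, x = rlo (nested_rect k))) as [u [Hu1 Hu2]].
  { exists b0. intros x [k ->]. destruct (nested_rect_spec k); lra. }
  { exists (rlo (nested_rect 0)), 0%nat; auto. }
  destruct (completeness (fun x => exists k, x = tlo (nested_rect k))) as [v [Hv1 Hv2]].
  { exists d0. intros x [k ->]. destruct (nested_rect_spec k) as (_ & _ & ? & ? & _); lra. }
  { exists (tlo (nested_rect 0)), 0%nat; auto. }
  exists u, v. split; intros k; split.
  - apply Hu1; exists k; auto.
  - apply Hu2. intros x [j ->]. destruct (le_lt_dec j k) as [h|h].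
    + destruct (nested_rect_mono j k h). destruct (nested_rect_spec k); lra.
    + destruct (nested_rect_mono k j ltac:(lia)) as (_ & ? & _). destruct (nested_rect_spec j); lra.
  - apply Hv1; exists k; auto.
  - apply Hv2. intros x [j ->]. destruct (le_lt_dec j k) as [h|h].
    + destruct (nested_rect_mono j k h) as (_ & _ & ? & _).
      destruct (nested_rect_spec k) as (_ & _ & ? & _); lra.
    + destruct (nested_rect_mono k j ltac:(lia)) as (_ & _ & _ & ?).
      destruct (nested_rect_spec j) as (_ & _ & ? & _); lra.
Qed.

(* [perimeter_bound / 2 ^ k] bounds both the diameter and the perimeter of [nested_rect k]. *)
Definition perimeter_bound : R := 2 * (b0 - a0) + 2 * b0 * (d0 - c0).

Lemma nested_rect_diameter u v k r t :
  rlo (nested_rect k) <= u <= rhi (nested_rect k) -> tlo (nested_rect k) <= v <= thi (nested_rect k) ->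
  rlo (nested_rect k) <= r <= rhi (nested_rect k) -> tlo (nested_rect k) <= t <= thi (nested_rect k) ->
  Cmod (Csub (polar r t) (polar u v)) <= perimeter_bound / 2 ^ k.
Proof.
  intros hu hv hr ht. destruct (nested_rect_spec k) as (i1 & i2 & i3 & i4 & i5 & i6 & _).
  assert (h2k : 0 < 2 ^ k) by (apply pow_lt; lra).
  eapply Rle_trans; [apply polar_lipschitz|]. rewrite (Rabs_right u) by lra.
  assert (Rabs (r - u) <= (b0 - a0) / 2 ^ k) by (apply Rabs_le; lra).
  assert (Rabs (t - v) <= (d0 - c0) / 2 ^ k) by (apply Rabs_le; lra).
  assert (u * Rabs (t - v) <= b0 * ((d0 - c0) / 2 ^ k)) by (apply Rmult_le_compat; try lra; apply Rabs_pos).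
  unfold perimeter_bound.
  replace ((2 * (b0 - a0) + 2 * b0 * (d0 - c0)) / 2 ^ k)
    with (2 * ((b0 - a0) / 2 ^ k) + 2 * (b0 * ((d0 - c0) / 2 ^ k))) by (field; lra).
  lra.
Qed.

Lemma nested_rect_perimeter k :
  2 * (rhi (nested_rect k) - rlo (nested_rect k))
  + (rlo (nested_rect k) + rhi (nested_rect k)) * (thi (nested_rect k) - tlo (nested_rect k))
  <= perimeter_bound / 2 ^ k.
Proof.
  destruct (nested_rect_spec k) as (i1 & i2 & i3 & i4 & i5 & i6 & _).
  assert (h2k : 0 < 2 ^ k) by (apply pow_lt; lra).
  rewrite i5, i6.
  assert ((rlo (nested_rect k) + rhi (nested_rect k)) * ((d0 - c0) / 2 ^ k) <= (2 * b0) * ((d0 - c0) / 2 ^ k))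
    by (apply Rmult_le_compat_r; [apply Rdiv_le_0_compat|]; lra).
  unfold perimeter_bound.
  replace ((2 * (b0 - a0) + 2 * b0 * (d0 - c0)) / 2 ^ k)
    with (2 * ((b0 - a0) / 2 ^ k) + 2 * b0 * ((d0 - c0) / 2 ^ k)) by (field; lra).
  lra.
Qed.

(* Near the common point [polar u v] the integrand is affine up to an error
   [E |z - polar u v|], and affine functions have zero boundary integral. *)
Lemma nested_rect_size_le u v E A l k :
  (forall j, rlo (nested_rect j) <= u <= rhi (nested_rect j)) ->
  (forall j, tlo (nested_rect j) <= v <= thi (nested_rect j)) -> 0 < E ->
  (forall r t, rlo (nested_rect k) <= r <= rhi (nested_rect k) -> tlo (nested_rect k) <= t <= thi (nested_rect k) ->
     Cmod (Csub (F (polar r t)) (affine A l (polar r t))) <= E * Cmod (Csub (polar r t) (polar u v))) ->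
  rect_size F (nested_rect k) <= 2 * (E * (perimeter_bound / 2 ^ k) * (perimeter_bound / 2 ^ k)).
Proof.
  intros Hu Hv hE Happrox.
  destruct (nested_rect_spec k) as (i1 & i2 & i3 & i4 & _).
  set (Q := nested_rect k) in *. set (rho := perimeter_bound / 2 ^ k).
  assert (hrho : 0 <= rho)
    by (unfold rho, perimeter_bound; apply Rdiv_le_0_compat; [nra|apply pow_lt; lra]).
  assert (HcQ : continuous_on_rect F (rlo Q) (rhi Q) (tlo Q) (thi Q))
    by (eapply continuous_on_rect_sub; [apply F_continuous_on_rect|..]; lra).
  assert (Hbound : forall re, Rabs (rect_integral F re Q) <= E * rho * rho).
  { intros re. unfold rect_integral.
    rewrite (boundary_integral_sub_affine re F A l) by (auto; lra).
    eapply Rle_trans; [apply boundary_integral_bound with (K := E * rho)|].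
    - lra.
    - lra.
    - intros r t hr ht. apply Ccontinuous_sub_affine, HcQ; auto.
    - intros r t hr ht. eapply Rle_trans; [apply Happrox; auto|].
      apply Rmult_le_compat_l; [lra|]. apply nested_rect_diameter; auto.
    - apply Rmult_le_compat_l; [nra|apply nested_rect_perimeter]. }
  unfold rect_size. pose proof (Hbound true); pose proof (Hbound false). lra.
Qed.

Theorem goursat re : boundary_integral re F a0 b0 c0 d0 = 0.
Proof.
  destruct nested_rect_common_point as [u [v [Hu Hv]]].
  destruct (F_derivable u v) as [l Hl].
  { pose proof (Hu 0%nat); pose proof (nested_rect_spec 0); simpl in *; lra. }
  { pose proof (Hv 0%nat); pose proof (nested_rect_spec 0); simpl in *; lra. }
  set (C := perimeter_bound).
  assert (hC : 0 <= C) by (unfold C, perimeter_bound; nra).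
  assert (Hsize : rect_size F (nested_rect 0) <= 0).
  { apply le_epsilon. intros e he. rewrite Rplus_0_l.
    set (E := e / (2 * (C * C + 1))).
    assert (hE : 0 < E) by (unfold E; apply Rdiv_lt_0_compat; [lra|nra]).
    destruct (has_cderiv_affine_approx F (polar u v) l E Hl hE) as [d [hd Hd]].
    destruct (exists_inv_pow2_lt (d / (C + 1))) as [k hk]; [apply Rdiv_lt_0_compat; lra|].
    assert (h2k : 0 < 2 ^ k) by (apply pow_lt; lra).
    assert (hrho : C / 2 ^ k < d).
    { apply Rle_lt_trans with ((C + 1) / 2 ^ k); [apply Rmult_le_compat_r; [left; apply Rinv_0_lt_compat|]; lra|].
      apply (Rmult_lt_compat_l (C + 1)) in hk; [|lra]. unfold Rdiv in *.
      replace ((C + 1) * (d * / (C + 1))) with d in hk by (field; lra). lra. }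
    pose proof (nested_rect_size_le u v E (Csub (F (polar u v)) (Cmul l (polar u v))) l k Hu Hv hE) as Hk.
    lapply Hk; clear Hk; [intros Hk|].
    2: { intros r t hr ht. apply Hd. eapply Rle_lt_trans; [apply nested_rect_diameter|]; eauto. }
    destruct (nested_rect_spec k) as (_ & _ & _ & _ & _ & _ & Hgrow).
    assert (E4 : 4 ^ k * (C / 2 ^ k * (C / 2 ^ k)) = C * C).
    { replace (4 ^ k) with (2 ^ k * 2 ^ k) by (rewrite <- Rpow_mult_distr; f_equal; lra). field. lra. }
    assert (2 * E * (C * C) <= e)
      by (unfold E; apply Rmult_le_reg_r with (2 * (C * C + 1)); [nra|]; field_simplify; nra).
    pose proof (pow_lt 4 k ltac:(lra)). fold C in Hk. nra. }
  unfold rect_size, rect_integral in Hsize; simpl in Hsize.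
  pose proof (Rabs_pos (boundary_integral true F a0 b0 c0 d0)).
  pose proof (Rabs_pos (boundary_integral false F a0 b0 c0 d0)).
  destruct re; apply Rabs_eq_0; lra.
Qed.

End Goursat.

(** * The mean value property *)

Definition circle_integral (re : bool) (F : Cplx -> Cplx) (r : R) : R :=
  RInt (fun t => part re (F (polar r t))) 0 (2 * PI).

Lemma two_PI_pos : 0 < 2 * PI.
Proof. pose proof PI_RGT_0; lra. Qed.

Lemma ex_RInt_circle re F r : (forall t, 0 <= t <= 2 * PI -> Ccontinuous F (polar r t)) ->
  ex_RInt (fun t => part re (F (polar r t))) 0 (2 * PI).
Proof.
  intros H. apply ex_RInt_part; [pose proof two_PI_pos; lra|]. intros t ht.
  apply (path_continuous_comp F (fun t => polar r t)); [apply path_continuous_angle|apply H, ht].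
Qed.

Lemma angular_integrand_div_id F r t : 0 < r ->
  angular_integrand (fun z => Cmul (F z) (Cinv z)) r t = Cmul (F (polar r t)) (0, 1).
Proof.
  intros hr. unfold angular_integrand.
  assert (E : Cmul (Cinv (polar r t)) (polar_dt r t) = (0, 1)).
  { apply Cplx_ext; unfold Cinv, polar, polar_dt; Cunfold; simpl;
      pose proof (sin2_cos2 t); unfold Rsqr in *;
      field_simplify_eq; try nra; replace (cos t ^ 2) with (1 - sin t ^ 2) by (simpl; lra); ring. }
  transitivity (Cmul (F (polar r t)) (Cmul (Cinv (polar r t)) (polar_dt r t))); [ring|]. rewrite E; ring.
Qed.

(* Goursat's theorem for [F(z)/z] on the polar rectangle [r1, r2] x [0, 2 PI]: the
   radial sides cancel and [dz/z = i dt] on the circles. *)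
Theorem circle_integral_annulus re F r1 r2 : 0 < r1 <= r2 ->
  (forall r t, r1 <= r <= r2 -> 0 <= t <= 2 * PI -> exists l, has_cderiv F (polar r t) l) ->
  circle_integral re F r1 = circle_integral re F r2.
Proof.
  intros hr HD. pose proof two_PI_pos.
  set (G := fun z => Cmul (F z) (Cinv z)).
  assert (HG : boundary_integral (negb re) G r1 r2 0 (2 * PI) = 0).
  { apply goursat; try lra. intros r t h1 h2. destruct (HD r t h1 h2) as [l Hl].
    eexists. apply has_cderiv_mul; [eauto|]. apply (has_cderiv_inv (fun w => w)); [apply has_cderiv_id|].
    apply polar_neq0; lra. }
  assert (Eside : forall r, radial_integrand G 0 r = radial_integrand G (2 * PI) r).
  { intros r. unfold radial_integrand, polar, Cexpi. rewrite cos_2PI, sin_2PI, cos_0, sin_0. reflexivity. }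
  set (s := if re then 1 else -1).
  assert (Ecircle : forall r, r1 <= r <= r2 ->
            RInt (fun t => part (negb re) (angular_integrand G r t)) 0 (2 * PI) = s * circle_integral re F r).
  { intros r hr'. unfold circle_integral. rewrite <- RInt_scal_R.
    - apply RInt_ext. intros t _. unfold G. rewrite angular_integrand_div_id by lra.
      unfold s, part; destruct re; Cunfold; simpl; ring.
    - apply ex_RInt_circle. intros t ht. destruct (HD r t hr' ht) as [l Hl].
      eapply has_cderiv_continuous; eauto. }
  unfold boundary_integral in HG.
  rewrite (RInt_ext (fun r => part (negb re) (radial_integrand G 0 r))
                    (fun r => part (negb re) (radial_integrand G (2 * PI) r))) in HG
    by (intros; rewrite Eside; reflexivity).
  rewrite !Ecircle in HG by lra.
  assert (s <> 0) by (unfold s; destruct re; lra).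
  apply Rmult_eq_reg_l with s; auto. lra.
Qed.

(* Differentiability is only assumed away from [0] and one further point [zs],
   with mere continuity there: the quotient [omega(z)/z] used for Schwarz's lemma
   is not known to be differentiable at [0]. *)
Section MeanValue.

Variable re : bool.
Variables (F : Cplx -> Cplx) (zs : Cplx).
Hypothesis F_continuous : forall z, Cmod z < 1 -> Ccontinuous F z.
Hypothesis F_derivable : forall z, Cmod z < 1 -> z <> Czero -> z <> zs -> exists l, has_cderiv F z l.

Lemma ex_RInt_circle_disk r : 0 <= r < 1 -> ex_RInt (fun t => part re (F (polar r t))) 0 (2 * PI).
Proof. intros hr. apply ex_RInt_circle. intros t _. apply F_continuous. rewrite Cmod_polar; lra. Qed.

Lemma circle_integral_continuous rho : 0 < rho < 1 -> forall e, 0 < e -> exists d, 0 < d /\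
  forall r, 0 < r < 1 -> Rabs (r - rho) < d -> Rabs (circle_integral re F r - circle_integral re F rho) <= e.
Proof.
  intros hrho e he. pose proof two_PI_pos. set (f := fun u v => part re (F (polar u v))).
  assert (HCf : forall x y, rho/2 <= x <= (1+rho)/2 -> 0 <= y <= 2 * PI -> continuity_2d_pt f x y).
  { intros x y hx hy eps. destruct (F_continuous (polar x y)) with (e := pos eps) as [d [hd Hd]].
    - rewrite Cmod_polar; lra.
    - apply cond_pos.
    - pose proof (Rabs_pos x).
      exists (mkposreal (d / (2 + 2 * Rabs x)) ltac:(apply Rdiv_lt_0_compat; lra)). simpl. intros u v hu hv.
      unfold f. eapply Rle_lt_trans; [apply Rabs_part_sub_le|]. apply Hd.
      eapply Rle_lt_trans; [apply polar_lipschitz|].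
      assert (Rabs x * Rabs (v - y) <= Rabs x * (d / (2 + 2 * Rabs x))) by (apply Rmult_le_compat_l; lra).
      assert (d = (2 + 2 * Rabs x) * (d / (2 + 2 * Rabs x))) by (field; lra). nra. }
  set (e' := e / (2 * PI + 1)).
  assert (he' : 0 < e') by (unfold e'; apply Rdiv_lt_0_compat; lra).
  destruct (uniform_continuity_2d f (rho/2) ((1+rho)/2) 0 (2*PI) HCf (mkposreal e' he')) as [dl Hdl].
  set (d := Rmin dl (Rmin (rho/2) ((1-rho)/2))).
  assert (hd1 : d <= dl) by apply Rmin_l.
  assert (hd2 : d <= rho/2) by (eapply Rle_trans; [apply Rmin_r|apply Rmin_l]).
  assert (hd3 : d <= (1-rho)/2) by (eapply Rle_trans; [apply Rmin_r|apply Rmin_r]).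
  exists d. split; [apply Rmin_pos; [apply cond_pos|apply Rmin_pos; lra]|].
  intros r hr hrr. unfold circle_integral.
  eapply Rle_trans; [apply Rabs_RInt_sub_le; [lra|apply ex_RInt_circle_disk; lra|apply ex_RInt_circle_disk; lra|]|].
  - intros t ht. left. apply Rabs_lt_between' in hrr. apply (Hdl rho t r t); try lra.
    + apply Rabs_lt_between'; lra.
    + replace (t - t) with 0 by ring; rewrite Rabs_R0; apply cond_pos.
  - simpl. replace ((2 * PI - 0) * e') with (e - e') by (unfold e'; field; lra). lra.
Qed.

Lemma circle_integral_near0 e : 0 < e -> exists d, 0 < d /\
  forall r, 0 < r < d -> Rabs (circle_integral re F r - 2 * PI * part re (F Czero)) <= e.
Proof.
  intros he. pose proof two_PI_pos.
  destruct (F_continuous Czero) with (e := e / (2 * PI)) as [d [hd Hd]];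
    [rewrite Cmod_zero; lra|apply Rdiv_lt_0_compat; lra|].
  exists (Rmin d 1); split; [apply Rmin_pos; lra|]. intros r hr.
  assert (hr1 : r < 1) by (pose proof (Rmin_r d 1); lra).
  assert (hrd : r < d) by (pose proof (Rmin_l d 1); lra).
  unfold circle_integral. replace (2 * PI * part re (F Czero)) with (RInt (fun _ => part re (F Czero)) 0 (2 * PI))
    by (rewrite RInt_const; unfold scal; simpl; unfold mult; simpl; ring).
  eapply Rle_trans; [apply Rabs_RInt_sub_le; [lra|apply ex_RInt_circle_disk; lra|apply ex_RInt_const|]|].
  - intros t ht. eapply Rle_trans; [apply Rabs_part_sub_le|]. left; apply Hd.
    replace (Csub (polar r t) Czero) with (polar r t) by ring. rewrite Cmod_polar; lra.
  - right; field; lra.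
Qed.

Lemma circle_integral_annulus_avoiding r1 r2 : 0 < r1 <= r2 -> r2 < 1 -> ~ (r1 <= Cmod zs <= r2) ->
  circle_integral re F r1 = circle_integral re F r2.
Proof.
  intros h1 h2 h3. apply circle_integral_annulus; auto. intros r t hr ht.
  apply F_derivable; [rewrite Cmod_polar; lra|apply polar_neq0; lra|].
  intros E. apply h3. rewrite <- E, Cmod_polar; lra.
Qed.

(* Across the exceptional circle [|z| = |zs|] by continuity in the radius. *)
Lemma circle_integral_eq_at_zs r : 0 < r < 1 -> 0 < Cmod zs < 1 ->
  circle_integral re F r = circle_integral re F (Cmod zs).
Proof.
  intros hr hs. set (s := Cmod zs) in *.
  apply Rminus_diag_uniq, Rabs_eq_0, Rle_antisym; [|apply Rabs_pos].
  apply le_epsilon; intros e he. rewrite Rplus_0_l.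
  destruct (circle_integral_continuous s hs e he) as [d [hd Hd]].
  destruct (Rtotal_order r s) as [h|[->|h]].
  - set (r' := Rmax r (s - d/2)).
    assert (hr' : r <= r' < s) by (unfold r'; split; [apply Rmax_l|apply Rmax_lub_lt; lra]).
    rewrite (circle_integral_annulus_avoiding r r') by (fold s; lra).
    assert (s - d/2 <= r') by apply Rmax_r.
    apply Hd; [lra|]. apply Rabs_lt_between'. lra.
  - replace (_ - _) with 0 by ring. rewrite Rabs_R0; lra.
  - set (r' := Rmin r (s + d/2)).
    assert (hr' : s < r' <= r) by (unfold r'; split; [apply Rmin_glb_lt; lra|apply Rmin_l]).
    rewrite <- (circle_integral_annulus_avoiding r' r) by (fold s; lra).
    assert (r' <= s + d/2) by apply Rmin_r.
    apply Hd; [lra|]. apply Rabs_lt_between'. lra.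
Qed.

Lemma circle_integral_const r r' : 0 < r < 1 -> 0 < r' < 1 -> circle_integral re F r = circle_integral re F r'.
Proof.
  intros h1 h2. destruct (Rlt_dec 0 (Cmod zs)) as [hs|hs]; [destruct (Rlt_dec (Cmod zs) 1) as [hs'|hs']|].
  - rewrite (circle_integral_eq_at_zs r), (circle_integral_eq_at_zs r'); auto.
  - destruct (Rle_dec r r'); [|symmetry]; apply circle_integral_annulus_avoiding; lra.
  - destruct (Rle_dec r r'); [|symmetry]; apply circle_integral_annulus_avoiding; lra.
Qed.

Theorem circle_integral_mean_value r : 0 < r < 1 -> circle_integral re F r = 2 * PI * part re (F Czero).
Proof.
  intros hr. apply Rminus_diag_uniq, Rabs_eq_0, Rle_antisym; [|apply Rabs_pos].
  apply le_epsilon; intros e he. rewrite Rplus_0_l.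
  destruct (circle_integral_near0 e he) as [d [hd Hd]].
  set (r' := Rmin (d/2) (1/2)).
  assert (hr' : 0 < r' <= d/2 /\ r' <= 1/2)
    by (unfold r'; repeat split; [apply Rmin_pos; lra|apply Rmin_l|apply Rmin_r]).
  rewrite (circle_integral_const r r') by lra. apply Hd; lra.
Qed.

End MeanValue.

Definition Cdot (v w : Cplx) : R := Re v * Re w + Im v * Im w.

Lemma Cdot_le_half_sum v w : Cdot v w <= (Cnorm2 v + Cnorm2 w) / 2.
Proof.
  unfold Cdot, Cnorm2. pose proof (pow2_ge_0 (Re v - Re w)); pose proof (pow2_ge_0 (Im v - Im w)). nra.
Qed.

Lemma eq_of_Cdot_eq1 v w : Cnorm2 v = 1 -> Cnorm2 w <= 1 -> Cdot v w = 1 -> w = v.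
Proof.
  unfold Cdot, Cnorm2. intros Hv Hw Hd.
  pose proof (pow2_ge_0 (Re v - Re w)); pose proof (pow2_ge_0 (Im v - Im w)).
  assert (Hsq : (Re v - Re w) * (Re v - Re w) + (Im v - Im w) * (Im v - Im w) = 0) by nra.
  assert (E1 : (Re v - Re w) * (Re v - Re w) = 0) by nra.
  assert (E2 : (Im v - Im w) * (Im v - Im w) = 0) by nra.
  apply Rmult_integral in E1; apply Rmult_integral in E2.
  apply Cplx_ext; lra.
Qed.

Section CircleAverages.

Variables (F : Cplx -> Cplx) (zs : Cplx).
Hypothesis F_continuous : forall z, Cmod z < 1 -> Ccontinuous F z.
Hypothesis F_derivable : forall z, Cmod z < 1 -> z <> Czero -> z <> zs -> exists l, has_cderiv F z l.

Lemma RInt_circle_Cdot v r : 0 < r < 1 ->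
  RInt (fun t => Cdot v (F (polar r t))) 0 (2 * PI) = 2 * PI * Cdot v (F Czero).
Proof.
  intros hr.
  pose proof (ex_RInt_circle_disk true F F_continuous r ltac:(lra)) as Ere.
  pose proof (ex_RInt_circle_disk false F F_continuous r ltac:(lra)) as Eim.
  pose proof (circle_integral_mean_value true F zs F_continuous F_derivable r hr) as Mre.
  pose proof (circle_integral_mean_value false F zs F_continuous F_derivable r hr) as Mim.
  unfold circle_integral, part in *. unfold Cdot.
  rewrite RInt_plus_R by (apply (@ex_RInt_scal R_CompleteNormedModule); assumption).
  rewrite !RInt_scal_R, Mre, Mim by assumption.
  match goal with |- ?x = ?y => change (@eq R x y) end. ring.
Qed.

Lemma continuous_circle_Cdot v r t : 0 <= r < 1 -> continuous (fun t => Cdot v (F (polar r t))) t.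
Proof.
  intros hr. unfold Cdot.
  apply (@continuous_plus R_NormedModule); apply (continuous_scal_r (K := R_AbsRing) (V := R_NormedModule));
    [apply (continuous_part true)|apply (continuous_part false)];
    (apply (path_continuous_comp F (fun t => polar r t));
      [apply path_continuous_angle|apply F_continuous; rewrite Cmod_polar; lra]).
Qed.

Lemma Cnorm2_center_le r M : 0 < r < 1 -> (forall t, Cnorm2 (F (polar r t)) <= M) -> Cnorm2 (F Czero) <= M.
Proof.
  intros hr HM. set (v := F Czero). pose proof two_PI_pos.
  assert (Hle : RInt (fun t => Cdot v (F (polar r t))) 0 (2 * PI) <= RInt (fun _ => (Cnorm2 v + M) / 2) 0 (2 * PI)).
  { apply RInt_le; [lra| |apply ex_RInt_const|].
    - apply (@ex_RInt_continuous R_CompleteNormedModule). intros t _. apply continuous_circle_Cdot; lra.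
    - intros t _. pose proof (Cdot_le_half_sum v (F (polar r t))). pose proof (HM t). lra. }
  rewrite RInt_circle_Cdot, RInt_const in Hle by auto.
  unfold scal in Hle; simpl in Hle; unfold mult in Hle; simpl in Hle.
  change (Cdot v (F Czero)) with (Cnorm2 v) in Hle.
  replace ((2 * PI - 0) * ((Cnorm2 v + M) / 2)) with (2 * PI * ((Cnorm2 v + M) / 2)) in Hle by ring.
  assert (Cnorm2 v <= (Cnorm2 v + M) / 2) by (apply Rmult_le_reg_l with (2 * PI); lra). lra.
Qed.

Lemma circle_eq_center_of_unimodular r : 0 < r < 1 -> Cnorm2 (F Czero) = 1 ->
  (forall t, Cnorm2 (F (polar r t)) <= 1) -> F (polar r 0) = F Czero.
Proof.
  intros hr Hv HM. set (v := F Czero) in *. pose proof two_PI_pos.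
  set (q := fun t => 1 - Cdot v (F (polar r t))).
  assert (Hcq : forall t, continuous q t).
  { intros t. apply (@continuous_minus R_NormedModule); [apply continuous_const|].
    apply continuous_circle_Cdot; lra. }
  assert (Hq : forall t, 0 <= q t).
  { intros t. pose proof (Cdot_le_half_sum v (F (polar r t))). pose proof (HM t). unfold q; cbv beta. lra. }
  assert (Iq : RInt q 0 (2 * PI) = 0).
  { unfold q. change (fun t => 1 - Cdot v (F (polar r t)))
      with (fun t => minus ((fun _ => 1) t) ((fun t => Cdot v (F (polar r t))) t)).
    rewrite (@RInt_minus R_CompleteNormedModule), RInt_const, RInt_circle_Cdot by
      (auto; try apply ex_RInt_const;
       apply (@ex_RInt_continuous R_CompleteNormedModule); intros t _; apply continuous_circle_Cdot; lra).
    change (Cdot v (F Czero)) with (Cnorm2 v). rewrite Hv.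
    unfold minus, plus, opp, scal, mult; simpl. unfold mult; simpl. ring. }
  pose proof (RInt_eq0_nonneg_left q 0 (2 * PI) H (fun t _ => Hcq t) (fun t _ => Hq t) Iq) as Z.
  apply eq_of_Cdot_eq1; auto. unfold q in Z. lra.
Qed.

End CircleAverages.

(** * Schwarz's lemma *)

Definition mobius_den (z1 w : Cplx) : Cplx := Cadd Cone (Cmul (Cconj z1) w).
Definition mobius (z1 w : Cplx) : Cplx := Cmul (Cadd w z1) (Cinv (mobius_den z1 w)).

Lemma Cnorm2_mobius_den z1 w :
  Cnorm2 (mobius_den z1 w) - Cnorm2 (Cadd w z1) = (1 - Cnorm2 w) * (1 - Cnorm2 z1).
Proof. unfold Cnorm2, mobius_den; destruct z1, w; Cunfold; simpl; ring. Qed.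

Lemma Cnorm2_mobius_den_pos z1 w : Cnorm2 z1 < 1 -> Cnorm2 w < 1 -> 0 < Cnorm2 (mobius_den z1 w).
Proof.
  intros h1 h2. pose proof (Cnorm2_mobius_den z1 w). pose proof (Cnorm2_ge0 (Cadd w z1)).
  assert (0 < (1 - Cnorm2 w) * (1 - Cnorm2 z1)) by (apply Rmult_lt_0_compat; lra). lra.
Qed.

Lemma mobius_den_neq0 z1 w : Cnorm2 z1 < 1 -> Cnorm2 w < 1 -> mobius_den z1 w <> Czero.
Proof.
  intros h1 h2 E. pose proof (Cnorm2_mobius_den_pos z1 w h1 h2). rewrite E in H.
  unfold Cnorm2 in H; Cunfold; simpl in H; lra.
Qed.

Lemma Cnorm2_mobius z1 w : Cnorm2 z1 < 1 -> Cnorm2 w < 1 ->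
  Cnorm2 (mobius z1 w) = 1 - (1 - Cnorm2 w) * (1 - Cnorm2 z1) / Cnorm2 (mobius_den z1 w).
Proof.
  intros h1 h2. pose proof (Cnorm2_mobius_den_pos z1 w h1 h2).
  unfold mobius. rewrite Cnorm2_mul, Cnorm2_inv by (apply mobius_den_neq0; auto).
  pose proof (Cnorm2_mobius_den z1 w).
  replace (Cnorm2 (Cadd w z1)) with (Cnorm2 (mobius_den z1 w) - (1 - Cnorm2 w) * (1 - Cnorm2 z1)) by lra.
  field. lra.
Qed.

Lemma Cnorm2_mobius_lt1 z1 w : Cnorm2 z1 < 1 -> Cnorm2 w < 1 -> Cnorm2 (mobius z1 w) < 1.
Proof.
  intros h1 h2. rewrite Cnorm2_mobius by auto. pose proof (Cnorm2_mobius_den_pos z1 w h1 h2).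
  assert (0 < (1 - Cnorm2 w) * (1 - Cnorm2 z1) / Cnorm2 (mobius_den z1 w))
    by (apply Rdiv_lt_0_compat; auto; apply Rmult_lt_0_compat; lra). lra.
Qed.

Lemma mobius_0 z1 : mobius z1 Czero = z1.
Proof. unfold mobius, mobius_den; Cunfold; destruct z1; simpl; apply Cplx_ext; simpl; field. Qed.

Lemma mobius_eq0 z1 w : Cnorm2 z1 < 1 -> Cnorm2 w < 1 -> mobius z1 w = Czero -> w = Copp z1.
Proof.
  intros h1 h2 E. pose proof (mobius_den_neq0 z1 w h1 h2) as nz. unfold mobius in E.
  assert (E' : Cadd w z1 = Czero).
  { transitivity (Cmul (Cmul (Cadd w z1) (Cinv (mobius_den z1 w))) (mobius_den z1 w)).
    - transitivity (Cmul (Cadd w z1) (Cmul (Cinv (mobius_den z1 w)) (mobius_den z1 w))); [|ring].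
      rewrite Cinv_l by auto. ring.
    - rewrite E. ring. }
  transitivity (Csub (Cadd w z1) z1); [ring|]. rewrite E'. ring.
Qed.

Lemma mobius_derivable z1 w : Cnorm2 z1 < 1 -> Cnorm2 w < 1 -> exists l, has_cderiv (mobius z1) w l.
Proof.
  intros h1 h2. eexists. unfold mobius. apply has_cderiv_mul.
  - apply (has_cderiv_add (fun w => w) (fun _ => z1)); [apply has_cderiv_id|apply has_cderiv_const].
  - apply (has_cderiv_inv (mobius_den z1)); [|apply mobius_den_neq0; auto].
    apply (has_cderiv_add (fun _ => Cone) (fun w => Cmul (Cconj z1) w)); [apply has_cderiv_const|].
    apply (has_cderiv_mul (fun _ => Cconj z1) (fun w => w)); [apply has_cderiv_const|apply has_cderiv_id].
Qed.

Lemma Cnorm2_mobius_ge z1 w : Cnorm2 z1 < 1 -> Cnorm2 w < 1 ->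
  1 - (1 - Cnorm2 w) * ((1 + Cmod z1) / (1 - Cmod z1)) <= Cnorm2 (mobius z1 w).
Proof.
  intros h1 h2. rewrite Cnorm2_mobius by auto. pose proof (Cnorm2_mobius_den_pos z1 w h1 h2).
  set (c := Cmod z1). assert (hc : 0 <= c < 1) by (split; [apply Cmod_ge0|apply Cmod_lt1_Cnorm2; auto]).
  assert (hz1 : Cnorm2 z1 = c * c) by (rewrite <- Cmod_sqr; reflexivity).
  assert (hD : (1 - c) * (1 - c) <= Cnorm2 (mobius_den z1 w)).
  { rewrite <- Cmod_sqr. assert (1 - c <= Cmod (mobius_den z1 w)).
    { unfold mobius_den. pose proof (Cmod_reverse_triangle Cone (Copp (Cmul (Cconj z1) w))) as Htri.
      replace (Csub Cone (Copp (Cmul (Cconj z1) w))) with (Cadd Cone (Cmul (Cconj z1) w)) in Htri by ring.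
      rewrite Cmod_opp, Cmod_mul, Cmod_conj, Cmod_one in Htri. fold c in Htri.
      assert (Cmod w < 1) by (apply Cmod_lt1_Cnorm2; auto). pose proof (Cmod_ge0 w).
      assert (c * Cmod w <= c) by (rewrite <- (Rmult_1_r c) at 2; apply Rmult_le_compat_l; lra). lra. }
    apply Rmult_le_compat; lra. }
  pose proof (Cnorm2_ge0 w).
  assert ((1 - Cnorm2 w) * (1 - c * c) / Cnorm2 (mobius_den z1 w) <= (1 - Cnorm2 w) * ((1 + c) / (1 - c))).
  { replace ((1 + c) / (1 - c)) with ((1 - c * c) / ((1 - c) * (1 - c))) by (field; lra).
    unfold Rdiv. rewrite !Rmult_assoc. apply Rmult_le_compat_l; [lra|]. apply Rmult_le_compat_l; [nra|].
    apply Rinv_le_contravar; nra. }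
  rewrite hz1. lra.
Qed.

Lemma exists_radius_near1 c eta : 0 <= c < 1 -> 0 < eta -> exists r, c < r < 1 /\ 1 - r * r <= eta.
Proof.
  intros hc he. exists (Rmax ((1 + c) / 2) (1 - Rmin eta 1 / 2)).
  pose proof (Rmin_l eta 1); pose proof (Rmin_r eta 1); pose proof (Rmin_pos eta 1 he ltac:(lra)).
  pose proof (Rmax_l ((1 + c) / 2) (1 - Rmin eta 1 / 2)); pose proof (Rmax_r ((1 + c) / 2) (1 - Rmin eta 1 / 2)).
  assert (Rmax ((1 + c) / 2) (1 - Rmin eta 1 / 2) < 1) by (apply Rmax_lub_lt; lra).
  split; [lra|nra].
Qed.

Lemma Rle_inv_of_mul_le x L : 0 < L -> x * L <= 1 -> x <= / L.
Proof. intros hL H. apply Rmult_le_reg_r with L; auto. rewrite Rinv_l by lra. exact H. Qed.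

Section Schwarz.

Variables (om : Cplx -> Cplx) (psi : Cplx).
Hypothesis om_maps_disk : forall z, Cmod z < 1 -> Cmod (om z) < 1.
Hypothesis om_derivable : forall z, Cmod z < 1 -> exists l, has_cderiv om z l.
Hypothesis om_0 : om Czero = Czero.
Hypothesis om_deriv_0 : has_cderiv om Czero psi.

Definition schwarz_quotient (z : Cplx) : Cplx :=
  if Ceq_dec z Czero then psi else Cmul (om z) (Cinv z).

Lemma schwarz_quotient_neq0 z : z <> Czero -> schwarz_quotient z = Cmul (om z) (Cinv z).
Proof. intros nz; unfold schwarz_quotient; destruct (Ceq_dec z Czero); [contradiction|auto]. Qed.

Lemma schwarz_quotient_0 : schwarz_quotient Czero = psi.
Proof. unfold schwarz_quotient; destruct (Ceq_dec Czero Czero); [auto|contradiction]. Qed.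

Lemma schwarz_quotient_continuous0 : Ccontinuous schwarz_quotient Czero.
Proof.
  intros e he. destruct (om_deriv_0 e he) as [d [hd Hd]]. exists d; split; auto. intros w Hw.
  rewrite schwarz_quotient_0. destruct (Ceq_dec w Czero) as [->|nw].
  - rewrite schwarz_quotient_0. replace (Csub psi psi) with Czero by ring. rewrite Cmod_zero; auto.
  - replace (Csub w Czero) with w in Hw by ring.
    specialize (Hd w (conj (Cmod_pos _ nw) Hw)). rewrite om_0 in Hd.
    replace (Cadd Czero w) with w in Hd by ring. replace (Csub (om w) Czero) with (om w) in Hd by ring.
    rewrite schwarz_quotient_neq0 by auto. exact Hd.
Qed.

Lemma schwarz_quotient_derivable z : Cmod z < 1 -> z <> Czero -> exists l, has_cderiv schwarz_quotient z l.
Proof.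
  intros hz nz. destruct (om_derivable z hz) as [l Hl]. eexists.
  apply (has_cderiv_ext (fun w => Cmul (om w) (Cinv w)) schwarz_quotient z _ (Cmod z)); [apply Cmod_pos; auto| |].
  - intros w hw. rewrite schwarz_quotient_neq0; auto. intros E. rewrite E, Cmod_sub_sym in hw.
    replace (Csub z Czero) with z in hw by ring. lra.
  - apply has_cderiv_mul; eauto. apply (has_cderiv_inv (fun w => w)); auto. apply has_cderiv_id.
Qed.

Lemma schwarz_quotient_continuous z : Cmod z < 1 -> Ccontinuous schwarz_quotient z.
Proof.
  intros hz. destruct (Ceq_dec z Czero) as [->|nz]; [apply schwarz_quotient_continuous0|].
  destruct (schwarz_quotient_derivable z hz nz) as [l Hl]. eapply has_cderiv_continuous; eauto.
Qed.

Lemma Cnorm2_schwarz_quotient z : z <> Czero -> Cnorm2 (schwarz_quotient z) * Cnorm2 z = Cnorm2 (om z).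
Proof.
  intros nz. rewrite schwarz_quotient_neq0, Cnorm2_mul, Cnorm2_inv by auto.
  pose proof (Cnorm2_pos z nz). field. lra.
Qed.

Lemma Cnorm2_schwarz_quotient_mobius_circle z1 r t : Cmod z1 < r < 1 ->
  0 < 1 - (1 - r * r) * ((1 + Cmod z1) / (1 - Cmod z1)) ->
  Cnorm2 (schwarz_quotient (mobius z1 (polar r t))) * (1 - (1 - r * r) * ((1 + Cmod z1) / (1 - Cmod z1))) <= 1.
Proof.
  intros hr hL. set (L := 1 - (1 - r * r) * ((1 + Cmod z1) / (1 - Cmod z1))) in *.
  pose proof (Cmod_ge0 z1).
  assert (hz1 : Cnorm2 z1 < 1) by (apply Cmod_lt1_Cnorm2; lra).
  assert (hP : Cmod (polar r t) = r) by (apply Cmod_polar; lra).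
  assert (n2P : Cnorm2 (polar r t) < 1) by (apply Cmod_lt1_Cnorm2; lra).
  assert (nz : mobius z1 (polar r t) <> Czero).
  { intros E. apply mobius_eq0 in E; auto. rewrite E, Cmod_opp in hP. lra. }
  pose proof (Cnorm2_schwarz_quotient _ nz) as E.
  assert (hm : Cnorm2 (om (mobius z1 (polar r t))) < 1)
    by (apply Cmod_lt1_Cnorm2, om_maps_disk, Cmod_lt1_Cnorm2, Cnorm2_mobius_lt1; auto).
  pose proof (Cnorm2_mobius_ge z1 (polar r t) hz1 n2P) as Hge.
  rewrite <- Cmod_sqr, hP in Hge. fold L in Hge.
  pose proof (Cnorm2_ge0 (schwarz_quotient (mobius z1 (polar r t)))). nra.
Qed.

Lemma le1_of_le_radius_bounds x c K : 0 <= c < 1 -> 0 < K -> 0 <= x ->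
  (forall r, c < r < 1 -> 0 < 1 - (1 - r * r) * K -> x * (1 - (1 - r * r) * K) <= 1) -> x <= 1.
Proof.
  intros hc hK hx H. apply le_epsilon. intros e he.
  destruct (exists_radius_near1 c (Rmin (e / (x * K + 1)) (1 / (2 * K)))) as [r [hr Hr]]; auto.
  { apply Rmin_pos; apply Rdiv_lt_0_compat; nra. }
  assert (H1 : (1 - r * r) * K <= 1 / 2).
  { apply Rle_trans with (1 / (2 * K) * K); [apply Rmult_le_compat_r; [lra|eapply Rle_trans; [apply Hr|apply Rmin_r]]|].
    right; field; lra. }
  assert (H2 : x * ((1 - r * r) * K) <= e).
  { assert (1 - r * r <= e / (x * K + 1)) by (eapply Rle_trans; [apply Hr|apply Rmin_l]).
    assert (0 <= 1 - r * r) by nra.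
    assert (hxK : 0 <= x * K) by (apply Rmult_le_pos; lra).
    apply Rle_trans with (x * K * (e / (x * K + 1))).
    - replace (x * ((1 - r * r) * K)) with (x * K * (1 - r * r)) by ring.
      apply Rmult_le_compat_l; auto.
    - replace (x * K * (e / (x * K + 1))) with (e - e / (x * K + 1)) by (field; lra).
      assert (0 < e / (x * K + 1)) by (apply Rdiv_lt_0_compat; lra). lra. }
  pose proof (H r hr ltac:(lra)). nra.
Qed.

(* The mean value property for [schwarz_quotient] composed with the Mobius map
   sending [0] to [z1], on circles [|w| = r] with [r -> 1]. *)
Theorem schwarz_quotient_le1 z1 : Cmod z1 < 1 -> Cnorm2 (schwarz_quotient z1) <= 1.
Proof.
  intros hz1. assert (n21 : Cnorm2 z1 < 1) by (apply Cmod_lt1_Cnorm2; auto).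
  set (G := fun w => schwarz_quotient (mobius z1 w)).
  assert (HC : forall w, Cmod w < 1 -> Ccontinuous G w).
  { intros w hw. apply Cmod_lt1_Cnorm2 in hw. unfold G. apply Ccontinuous_comp.
    - destruct (mobius_derivable z1 w n21 hw) as [l Hl]; eapply has_cderiv_continuous; eauto.
    - apply schwarz_quotient_continuous, Cmod_lt1_Cnorm2, Cnorm2_mobius_lt1; auto. }
  assert (HD : forall w, Cmod w < 1 -> w <> Czero -> w <> Copp z1 -> exists l, has_cderiv G w l).
  { intros w hw _ hw2. apply Cmod_lt1_Cnorm2 in hw.
    destruct (mobius_derivable z1 w n21 hw) as [l1 Hl1].
    destruct (schwarz_quotient_derivable (mobius z1 w)) as [l2 Hl2].
    - apply Cmod_lt1_Cnorm2, Cnorm2_mobius_lt1; auto.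
    - intros E; apply hw2, mobius_eq0; auto.
    - eexists. unfold G. apply has_cderiv_comp; eauto. }
  pose proof (Cmod_ge0 z1).
  apply (le1_of_le_radius_bounds _ (Cmod z1) ((1 + Cmod z1) / (1 - Cmod z1)));
    [lra|apply Rdiv_lt_0_compat; lra|apply Cnorm2_ge0|].
  intros r hr hL.
  pose proof (Cnorm2_center_le G (Copp z1) HC HD r _ ltac:(lra)
    (fun t => Rle_inv_of_mul_le _ _ hL (Cnorm2_schwarz_quotient_mobius_circle z1 r t ltac:(lra) hL))) as Hv.
  unfold G in Hv. rewrite mobius_0 in Hv.
  apply Rmult_le_reg_r with (/ (1 - (1 - r * r) * ((1 + Cmod z1) / (1 - Cmod z1)))); [apply Rinv_0_lt_compat; lra|].
  rewrite Rmult_assoc, Rinv_r, Rmult_1_l, Rmult_1_r by lra. exact Hv.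
Qed.

(* With [u = z / |z|], [w |-> schwarz_quotient (u w)] has modulus at most [1] and
   equals the unimodular [psi] at [0], hence also at [w = |z|]. *)
Theorem schwarz_rigidity z : Cnorm2 psi = 1 -> Cmod z < 1 -> om z = Cmul psi z.
Proof.
  intros Hpsi hz. destruct (Ceq_dec z Czero) as [->|nz]; [rewrite om_0; ring|].
  set (rho := Cmod z). assert (hrho : 0 < rho < 1) by (split; [apply Cmod_pos|]; auto).
  set (u := Cmul z (RtoC (/ rho))).
  assert (Cu : forall w, Cmod (Cmul u w) = Cmod w).
  { intros w. unfold u. rewrite !Cmod_mul, Cmod_RtoC, Rabs_right by (left; apply Rinv_0_lt_compat; lra).
    fold rho. field. lra. }
  set (F := fun w => schwarz_quotient (Cmul u w)).
  assert (HC : forall w, Cmod w < 1 -> Ccontinuous F w).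
  { intros w hw. apply (Ccontinuous_comp schwarz_quotient (fun w => Cmul u w)).
    - apply Ccontinuous_mul; [apply Ccontinuous_const|apply Ccontinuous_id].
    - apply schwarz_quotient_continuous. rewrite Cu; auto. }
  assert (HD : forall w, Cmod w < 1 -> w <> Czero -> w <> Czero -> exists l, has_cderiv F w l).
  { intros w hw nw _. assert (nuw : Cmul u w <> Czero).
    { intros E. apply (f_equal Cmod) in E. rewrite Cu, Cmod_zero in E. apply nw, Cmod_eq0, E. }
    destruct (schwarz_quotient_derivable (Cmul u w)) as [l Hl]; [rewrite Cu; auto|auto|].
    eexists. apply (has_cderiv_comp schwarz_quotient (fun w => Cmul u w)); eauto.
    apply (has_cderiv_mul (fun _ => u) (fun w => w)); [apply has_cderiv_const|apply has_cderiv_id]. }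
  assert (F0 : F Czero = psi) by (unfold F; replace (Cmul u Czero) with Czero by ring; apply schwarz_quotient_0).
  assert (Hz : Cmul u (polar rho 0) = z).
  { unfold u, polar. rewrite cos_0, sin_0. destruct z as [z1 z2]. Cunfold; simpl; apply Cplx_ext; simpl; field; lra. }
  assert (Hq : schwarz_quotient z = psi).
  { rewrite <- F0, <- Hz. apply (circle_eq_center_of_unimodular F Czero HC HD rho hrho); [rewrite F0; auto|].
    intros t. apply schwarz_quotient_le1. rewrite Cu, Cmod_polar; lra. }
  rewrite schwarz_quotient_neq0 in Hq by auto. rewrite <- Hq.
  transitivity (Cmul (om z) (Cmul (Cinv z) z)); [rewrite Cinv_l by auto; ring|ring].
Qed.

End Schwarz.

(** * The slanted half-plane *)

Lemma Cadd_one_neq0 w : - (1/2) < Re w -> Cadd Cone w <> Czero.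
Proof. intros Hw E. apply (f_equal Re) in E. Cunfold; simpl in *. lra. Qed.

Lemma Cnorm2_cayley_lt1 w : - (1/2) < Re w -> Cnorm2 (Cmul w (Cinv (Cadd Cone w))) < 1.
Proof.
  intros Hw. pose proof (Cadd_one_neq0 w Hw) as nz. pose proof (Cnorm2_pos _ nz).
  rewrite Cnorm2_mul, Cnorm2_inv by auto.
  assert (E : Cnorm2 (Cadd Cone w) = Cnorm2 w + 1 + 2 * Re w) by (unfold Cnorm2; Cunfold; simpl; ring).
  apply Rmult_lt_reg_r with (Cnorm2 (Cadd Cone w)); auto.
  rewrite Rmult_assoc, Rinv_l by lra. lra.
Qed.

(* [w / (1 + w)] maps the half-plane [Re w > -1/2] onto the unit disk. *)
Theorem half_plane_rigidity (k k' : Cplx -> Cplx) (S : Cplx) :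
  (forall z, Cmod z < 1 -> has_cderiv k z (k' z)) -> k Czero = Czero -> k' Czero = S -> Cnorm2 S = 1 ->
  (forall z, Cmod z < 1 -> - (1/2) < Re (k z)) ->
  forall z, Cmod z < 1 -> Cmul (k z) (Csub Cone (Cmul S z)) = Cmul S z.
Proof.
  intros Hk k0 k'0 HS Hre.
  set (om := fun z => Cmul (k z) (Cinv (Cadd Cone (k z)))).
  assert (Hom' : forall z, Cmod z < 1 -> has_cderiv om z
            (Cadd (Cmul (k' z) (Cinv (Cadd Cone (k z))))
                  (Cmul (k z) (Copp (Cmul (Cadd Czero (k' z)) (Cinv (Cmul (Cadd Cone (k z)) (Cadd Cone (k z))))))))).
  { intros z hz. unfold om. apply (has_cderiv_mul k (fun w => Cinv (Cadd Cone (k w)))); auto.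
    apply (has_cderiv_inv (fun w => Cadd Cone (k w))); [|apply Cadd_one_neq0; auto].
    apply (has_cderiv_add (fun _ => Cone)); [apply has_cderiv_const|auto]. }
  assert (hz0 : Cmod Czero < 1) by (rewrite Cmod_zero; lra).
  assert (om0 : om Czero = Czero) by (unfold om; rewrite k0; ring).
  assert (om'0 : has_cderiv om Czero S).
  { specialize (Hom' Czero hz0). rewrite k0, k'0 in Hom'.
    replace (Cinv (Cadd Cone Czero)) with Cone in Hom' by (Cext; field).
    match type of Hom' with has_cderiv _ _ ?l => replace l with S in Hom' by ring end. exact Hom'. }
  intros z hz.
  assert (Hom : om z = Cmul S z).
  { apply (schwarz_rigidity om S); auto.
    - intros w hw. apply Cmod_lt1_Cnorm2, Cnorm2_cayley_lt1, Hre, hw.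
    - intros w hw. eexists; apply Hom', hw. }
  pose proof (Cadd_one_neq0 _ (Hre z hz)) as nz.
  rewrite <- Hom. unfold om. set (I := Cinv (Cadd Cone (k z))).
  transitivity (Csub (Cmul (k z) (Cmul I (Cadd Cone (k z)))) (Cmul (k z) (Cmul (k z) I))); [|ring].
  unfold I; rewrite Cinv_l by auto. ring.
Qed.

Lemma Cmod_one_add_bounds a : Cmod a < 1 -> 0 < Cmod (Cadd Cone a) < 2.
Proof.
  intros ha. split.
  - pose proof (Cmod_reverse_triangle Cone (Copp a)) as H.
    replace (Csub Cone (Copp a)) with (Cadd Cone a) in H by ring.
    rewrite Cmod_one, Cmod_opp in H. lra.
  - pose proof (Cmod_triangle Cone a). rewrite Cmod_one in H. lra.
Qed.

Lemma aprime_bounds a : Cmod a < 1 -> -1 < aprime a < 1.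
Proof. intros ha. pose proof (Cmod_one_add_bounds a ha). unfold aprime. lra. Qed.

Lemma Cmod_expi_gamma_a a : Cmod a < 1 -> Cmod (expi_gamma_a a) = 1.
Proof.
  intros ha. unfold expi_gamma_a. pose proof (Cmod_one_add_bounds a ha).
  replace (Cadd Cone (Cconj a)) with (Cconj (Cadd Cone a)) by (Cext; ring).
  rewrite Cmod_div by (rewrite Cmod_conj; intros E; injection E as E; lra).
  rewrite Cmod_conj, Cmod_RtoC, Rabs_right by lra. field; lra.
Qed.

Lemma half_plane_coefficient a gamma : Cmod a < 1 ->
  Cdiv (Cexpi gamma) (Cadd Cone a)
  = Cmul (RtoC (/ Cmod (Cadd Cone a))) (Cmul (Cexpi gamma) (expi_gamma_a a)).
Proof.
  intros ha. pose proof (Cmod_one_add_bounds a ha) as hr. unfold expi_gamma_a.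
  replace (Cadd Cone (Cconj a)) with (Cconj (Cadd Cone a)) by (Cext; ring).
  rewrite Cmod_conj. set (r := Cmod (Cadd Cone a)) in *.
  pose proof (Cmod_sqr (Cadd Cone a)) as Hr. fold r in Hr.
  destruct a as [a1 a2]. unfold Cnorm2 in Hr; unfold Cdiv, Cinv, Cexpi in *; Cunfold; simpl in *.
  rewrite <- Hr. apply Cplx_ext; simpl; field; lra.
Qed.

(* With [phi = S / r0], the normalisation [h'(0) = 1], [g'(0) = (r0 - 1) S^2]
   makes [S] the derivative of [phi h + conj(phi) g] at [0]. *)
Lemma rotated_derivative_0 r0 S : 0 < r0 -> Cnorm2 S = 1 ->
  Cadd (Cmul (Cmul (RtoC (/ r0)) S) Cone)
       (Cmul (Cconj (Cmul (RtoC (/ r0)) S)) (Cmul (RtoC (r0 - 1)) (Cmul S S))) = S.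
Proof.
  intros hr HS. rewrite Cconj_mul_RtoC.
  transitivity (Cadd (Cmul (RtoC (/ r0)) S)
                     (Cmul (Cmul (RtoC (/ r0)) (RtoC (r0 - 1))) (Cmul (Cmul (Cconj S) S) S))); [ring|].
  rewrite Cconj_mul_self by auto. Cext; field; lra.
Qed.

Lemma unrotate r0 S x y : 0 < r0 -> Cnorm2 S = 1 ->
  Cadd x (Cmul (Cconj (Cmul S S)) y)
  = Cmul (Cmul (RtoC r0) (Cconj S))
         (Cadd (Cmul (Cmul (RtoC (/ r0)) S) x) (Cmul (Cconj (Cmul (RtoC (/ r0)) S)) y)).
Proof.
  intros hr HS. rewrite Cconj_mul_RtoC.
  replace (Cconj (Cmul S S)) with (Cmul (Cconj S) (Cconj S)) by (Cext; ring).
  transitivity (Cmul (Cmul (RtoC r0) (RtoC (/ r0)))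
                     (Cadd (Cmul (Cmul (Cconj S) S) x) (Cmul (Cmul (Cconj S) (Cconj S)) y))); [|ring].
  rewrite Cconj_mul_self by auto. replace (Cmul (RtoC r0) (RtoC (/ r0))) with Cone by (Cext; field; lra).
  ring.
Qed.

Lemma Re_rotated_sum_gt a gamma h g z : maps_onto_Hag h g a gamma -> Cmod z < 1 ->
  - (1/2) < Re (Cadd (Cmul (Cdiv (Cexpi gamma) (Cadd Cone a)) (h z))
                     (Cmul (Cconj (Cdiv (Cexpi gamma) (Cadd Cone a))) (g z))).
Proof.
  intros Honto hz. destruct (Honto (harm h g z)) as [Hin _].
  specialize (Hin (ex_intro _ z (conj hz eq_refl))). unfold in_Hag in Hin.
  unfold harm in Hin. destruct (h z), (g z). Cunfold; simpl in *. lra.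
Qed.

Theorem proposition1 (a : Cplx) (gamma : R) (h h' g g' : Cplx -> Cplx) :
  inD a -> 0 <= gamma < 2 * PI ->
  in_SH h h' g g' ->
  maps_onto_Hag h g a gamma ->
  g' Czero = Cmul (RtoC (aprime a))
             (Cmul (Cmul (Cexpi gamma) (expi_gamma_a a))
                   (Cmul (Cexpi gamma) (expi_gamma_a a))) ->
  (-1 < aprime a < 1) /\ Cmod (g' Czero) < 1 /\
  forall z, inD z ->
    Cadd (h z)
         (Cmul (Cconj (Cmul (Cmul (Cexpi gamma) (expi_gamma_a a))
                            (Cmul (Cexpi gamma) (expi_gamma_a a))))
               (g z))
    = Cdiv (Cmul (RtoC (1 + aprime a)) z)
           (Csub Cone (Cmul (Cmul (Cexpi gamma) (expi_gamma_a a)) z)).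
Proof.
  unfold inD. intros Ha _ (Hh & Hg & h0 & g0 & h'0 & _ & _) Honto Hg'0.
  set (S := Cmul (Cexpi gamma) (expi_gamma_a a)) in *.
  assert (CS : Cmod S = 1) by (unfold S; rewrite Cmod_mul, Cmod_expi, Cmod_expi_gamma_a by auto; ring).
  assert (HS : Cnorm2 S = 1) by (rewrite <- Cmod_sqr, CS; ring).
  pose proof (Cmod_one_add_bounds a Ha) as hr0. set (r0 := Cmod (Cadd Cone a)) in *.
  assert (ha' : aprime a = r0 - 1) by reflexivity.
  split; [apply aprime_bounds, Ha|]. split.
  { rewrite Hg'0, !Cmod_mul, Cmod_RtoC, CS, ha', !Rmult_1_r. apply Rabs_def1; lra. }
  set (phi := Cmul (RtoC (/ r0)) S).
  set (k := fun z => Cadd (Cmul phi (h z)) (Cmul (Cconj phi) (g z))).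
  assert (Hre : forall z, Cmod z < 1 -> - (1/2) < Re (k z)).
  { intros z hz. pose proof (Re_rotated_sum_gt a gamma h g z Honto hz) as Hz.
    rewrite half_plane_coefficient in Hz by auto. exact Hz. }
  assert (Hk' : forall z, Cmod z < 1 ->
            has_cderiv k z (Cadd (Cmul phi (h' z)) (Cmul (Cconj phi) (g' z))))
    by (intros z hz; apply has_cderiv_add; apply has_cderiv_scale; auto).
  assert (k0 : k Czero = Czero) by (unfold k; rewrite h0, g0; ring).
  assert (k'0 : Cadd (Cmul phi (h' Czero)) (Cmul (Cconj phi) (g' Czero)) = S)
    by (rewrite h'0, Hg'0, ha'; apply rotated_derivative_0; auto; lra).
  intros z hz. rewrite unrotate with (r0 := r0) by (auto; lra). fold phi. fold (k z).
  apply eq_Cdiv_of_Cmul.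
  - intros E. apply Csub_eq0, (f_equal Cmod) in E. rewrite Cmod_mul, CS, Cmod_one in E. lra.
  - transitivity (Cmul (Cmul (RtoC r0) (Cconj S)) (Cmul (k z) (Csub Cone (Cmul S z)))); [ring|].
    rewrite (half_plane_rigidity k _ S Hk' k0 k'0 HS Hre z hz).
    transitivity (Cmul (RtoC r0) (Cmul (Cmul (Cconj S) S) z)); [ring|].
    rewrite Cconj_mul_self, ha' by auto. replace (1 + (r0 - 1)) with r0 by ring. ring.
Qed.
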